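(* Let $A=\mathrm{Circ}(a_0,\dots,a_{n-1})\neq 0$, and let $p_1>p_2>\dots>p_s$ be all the indices in $\{1,\dots,n-1\}$ with $a_{p_1}=\dots=a_{p_s}=\lambda(A)$ (possibly $s=0$). Then: (i) the critical digraph $\mathcal{C}(A)$ consists of $m=\gcd(n,p_1,\dots,p_s)$ isomorphic strongly connected components, and for $i\in\{1,\dots,m\}$ the node set of the $i$-th component is $\{i,i+m,\dots,i+(n/m-1)m\}$; (ii) $\mathrm{per}(A)$, which equals the cyclicity of each of these components, is $1$ if $a_0=\lambda(A)$, and if $a_0\neq\lambda(A)$ then $$\mathrm{per}(A)=\gcd\Big(\tfrac{n}{\gcd(n,p_1)},\tfrac{p_1-p_2}{\gcd(p_1,p_2)},\tfrac{p_1-p_3}{\gcd(p_1,p_3)},\dots,\tfrac{p_1-p_s}{\gcd(p_1,p_s)}\Big)$$ $$=\gcd\Big(\tfrac{n}{\gcd(n,p_1)},\tfrac{p_1-p_2}{\gcd(p_1,p_2)},\tfrac{p_2-p_3}{\gcd(p_2,p_3)},\dots,\tfrac{p_{s-1}-p_s}{\gcd(p_{s-1},p_s)}\Big)$$ $$=\gcd\Big(\tfrac{n}{\gcd(n,p_1)},\tfrac{p_1-p_2}{\gcd(n,p_1,p_2)},\tfrac{p_1-p_3}{\gcd(n,p_1,p_2,p_3)},\dots,\tfrac{p_1-p_s}{\gcd(n,p_1,\dots,p_s)}\Big).$$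
   Context: Max algebra on $\mathbb{R}_+$ with $a\oplus b=\max(a,b)$ and ordinary product; $A^t$ is the max-algebraic power. $A=\mathrm{Circ}(a_0,\dots,a_{n-1})$ means $A_{i,j}=a_t$ with $t\in\{0,\dots,n-1\}$, $t\equiv j-i\pmod n$. The digraph $\mathcal{G}(A)$ has nodes $\{1,\dots,n\}$ and edges $(i,j)$ with $A_{i,j}\neq0$, weight $A_{i,j}$; a cycle's mean is the geometric mean of its edge weights; $\lambda(A)$ is the maximum cycle geometric mean (= largest max-algebraic eigenvalue). The critical digraph $\mathcal{C}(A)$ consists of all nodes and edges of the cycles of $\mathcal{G}(A)$ attaining mean $\lambda(A)$. The cyclicity of a strongly connected digraph is the gcd of its cycle lengths; of a digraph that is a disjoint union of strongly connected components with no walks between components, it is the lcm of the components' cyclicities. For $\lambda(A)\ne0$, $\mathrm{per}(A)$ is the ultimate period of the sequence $\{(A/\lambda(A))^t\}_{t\ge1}$, i.e. the least $\sigma$ such that $(A/\lambda(A))^{t+\sigma}=(A/\lambda(A))^t$ for all sufficiently large $t$. *)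

From Stdlib Require Import Reals Lra Lia Arith List Sorting.Sorted Relations.
Import ListNotations.
Open Scope R_scope.

(* Nodes of G(A) are 0,...,n-1 (paper's node i is our node i-1).
   An n x n matrix is a function nat -> nat -> R, only entries i,j < n matter. *)
Definition mat := nat -> nat -> R.

Definition circ (n : nat) (a : nat -> R) : mat :=
  fun i j => a ((j + n - i) mod n)%nat.

Definition mmul (n : nat) (A B : mat) : mat :=
  fun i j => fold_right Rmax 0 (map (fun k => A i k * B k j) (seq 0 n)).
Definition mid : mat := fun i j => if Nat.eqb i j then 1 else 0.
Fixpoint mpow (n : nat) (A : mat) (t : nat) : mat :=
  match t with
  | O => mid
  | S t' => mmul n A (mpow n A t')
  end.
Definition mscale (A : mat) (c : R) : mat := fun i j => A i j / c.

Definition ult_periodic (n : nat) (f : nat -> mat) (sigma : nat) : Prop :=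
  exists T : nat, forall t : nat, (T <= t)%nat ->
    forall i j, (i < n)%nat -> (j < n)%nat -> f (t + sigma)%nat i j = f t i j.
Definition is_ult_period (n : nat) (f : nat -> mat) (sigma : nat) : Prop :=
  (0 < sigma)%nat /\ ult_periodic n f sigma /\
  forall sigma', (0 < sigma')%nat -> ult_periodic n f sigma' -> (sigma <= sigma')%nat.

(* A cycle (closed walk) is a nonempty node list [v0; ...; v_{k-1}];
   its edges are (v0,v1),...,(v_{k-2},v_{k-1}),(v_{k-1},v0). *)
Definition cycle_edges (c : list nat) : list (nat * nat) :=
  combine c (tl c ++ firstn 1 c).
Definition is_cycle (n : nat) (A : mat) (c : list nat) : Prop :=
  c <> [] /\ Forall (fun v => (v < n)%nat) c /\
  Forall (fun e => A (fst e) (snd e) <> 0) (cycle_edges c).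
Definition cycle_weight (A : mat) (c : list nat) : R :=
  fold_right Rmult 1 (map (fun e => A (fst e) (snd e)) (cycle_edges c)).
Definition cycle_mean (A : mat) (c : list nat) : R :=
  Rpower (cycle_weight A c) (/ INR (length c)).

Definition is_lambda (n : nat) (A : mat) (lam : R) : Prop :=
  (exists c, is_cycle n A c /\ cycle_mean A c = lam) /\
  (forall c, is_cycle n A c -> cycle_mean A c <= lam).

Definition crit_cycle (n : nat) (A : mat) (lam : R) (c : list nat) : Prop :=
  is_cycle n A c /\ cycle_mean A c = lam.
Definition crit_node (n : nat) (A : mat) (lam : R) (v : nat) : Prop :=
  exists c, crit_cycle n A lam c /\ In v c.
Definition crit_edge (n : nat) (A : mat) (lam : R) (u v : nat) : Prop :=
  exists c, crit_cycle n A lam c /\ In (u, v) (cycle_edges c).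
Definition crit_scc (n : nat) (A : mat) (lam : R) (u v : nat) : Prop :=
  crit_node n A lam u /\ crit_node n A lam v /\
  clos_refl_trans nat (crit_edge n A lam) u v /\
  clos_refl_trans nat (crit_edge n A lam) v u.

(* node set {j < n | j mod m = r} (paper: {r+1, r+1+m, ..., r+1+(n/m-1)m}) *)
Definition comp_nodes (n m r : nat) (v : nat) : Prop :=
  (v < n)%nat /\ (v mod m = r)%nat.

Definition comp_cycle_length (n : nat) (A : mat) (lam : R) (m r : nat) (k : nat) : Prop :=
  exists c, c <> [] /\ Forall (comp_nodes n m r) c /\
    Forall (fun e => crit_edge n A lam (fst e) (snd e)) (cycle_edges c) /\
    length c = k.

Definition is_gcd_of (P : nat -> Prop) (g : nat) : Prop :=
  (forall k, P k -> Nat.divide g k) /\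
  (forall d, (forall k, P k -> Nat.divide d k) -> Nat.divide d g).

Definition gcd_list (n : nat) (ps : list nat) : nat := fold_right Nat.gcd n ps.

Definition per_formula1 (n : nat) (ps : list nat) : nat :=
  let p1 := hd 0%nat ps in
  fold_right Nat.gcd (n / Nat.gcd n p1)%nat
    (map (fun q => ((p1 - q) / Nat.gcd p1 q)%nat) (tl ps)).
Definition per_formula2 (n : nat) (ps : list nat) : nat :=
  let p1 := hd 0%nat ps in
  fold_right Nat.gcd (n / Nat.gcd n p1)%nat
    (map (fun pq => ((fst pq - snd pq) / Nat.gcd (fst pq) (snd pq))%nat)
         (combine ps (tl ps))).
Definition per_formula3 (n : nat) (ps : list nat) : nat :=
  let p1 := hd 0%nat ps in
  fold_right Nat.gcd (n / Nat.gcd n p1)%nat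
    (map (fun j => ((p1 - nth (j - 1) ps 0) / gcd_list n (firstn j ps))%nat)
         (seq 2 (length ps - 1))).

(* An edge (u, v) of G(A) carries the weight a_d with d = (v - u) mod n, so a walk is a start
   node together with a list of offsets, and it is closed iff the offsets sum to 0 mod n. The
   loop made of n equal offsets t shows a_t <= lambda, so a cycle is critical iff all its offsets
   d are critical (a_d = lambda); hence C(A) has every node and the edges u -> u + p for every
   critical p. By Bezout these steps generate the steps by m = gcd(n, p_1, ..., p_s), while
   every critical step preserves the residue mod m, and translations permute the components.
   For (ii) fix a critical offset s0 (0 if a_0 = lambda, else p_1). Pigeonhole shortens long
   lists of critical offsets, so the reduced sums (sum of d - s0) of n critical offsets form the
   subgroup of Z_n generated by the differences of critical offsets, and long closed critical
   walks exist exactly for the lengths divisible by some sigma: the cyclicity of every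
   component. The entries of (A/lambda)^t are maxima over walks of products of factors
   a_d/lambda <= 1; pigeonhole again turns an optimal long walk into one with at least
   n + sigma critical steps, whose length can be changed by sigma at no cost, so sigma is an
   eventual period, and it is the least one since a diagonal entry 1 forces a critical closed
   walk. When a_0 <> lambda, sigma | k iff gcd(n, p_1 - p_2, ..., p_1 - p_s) | k p_1, and
   elementary gcd manipulations identify sigma with the three formulas. *)

From Stdlib Require Import Reals Arith Lia Lra List Sorting.Sorted Relations ListDec Classical.
Import ListNotations.
Open Scope R_scope.

(** * Offsets and walks *)

Lemma mod_eq_of_add_mul n a b k1 k2 : (a + k1 * n = b + k2 * n)%nat -> a mod n = b mod n.
Proof.
  intro H. rewrite <- (Nat.Div0.mod_add a k1 n), <- (Nat.Div0.mod_add b k2 n), H. reflexivity.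
Qed.

Ltac div_mod_facts x n :=
  pose proof (Nat.div_mod_eq x n);
  assert ((x) mod n < n)%nat by (apply Nat.mod_upper_bound; lia).
Ltac generalize_div_mod := repeat match goal with
  | |- context [?x / ?n] => generalize dependent (x / n); intros
  | H : context [?x / ?n] |- _ => generalize dependent (x / n); intros
  | |- context [?x mod ?n] => generalize dependent (x mod n); intros
  | H : context [?x mod ?n] |- _ => generalize dependent (x mod n); intros
  end.

Lemma add_mod0_r n x y : (x mod n = 0)%nat -> ((y + x) mod n = y mod n)%nat.
Proof. intros H. rewrite Nat.Div0.add_mod, H, Nat.add_0_r, Nat.Div0.mod_mod. auto. Qed.

Lemma mod_add_congr_l n x x' y : (x mod n = x' mod n)%nat -> ((y + x) mod n = (y + x') mod n)%nat.
Proof. intro E. rewrite (Nat.Div0.add_mod y x), (Nat.Div0.add_mod y x'), E. auto. Qed.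

Lemma mod_add_cancel_r n x y z : (0 < n)%nat ->
  ((x + y) mod n = (z + y) mod n)%nat -> (x mod n = z mod n)%nat.
Proof.
  intros Hn H. div_mod_facts (x + y)%nat n. div_mod_facts (z + y)%nat n.
  apply (mod_eq_of_add_mul _ _ _ ((z + y) / n) ((x + y) / n)). rewrite H in *.
  generalize_div_mod. nia.
Qed.

Lemma mod_mod_divide n m x : (0 < m)%nat -> Nat.divide m n -> ((x mod n) mod m = x mod m)%nat.
Proof.
  intros Hm [k ->]. destruct k. reflexivity.
  div_mod_facts x (S k * m)%nat.
  apply (mod_eq_of_add_mul _ _ _ (S k * (x / (S k * m))) 0). generalize_div_mod. nia.
Qed.

Lemma divide_mod_iff n g x : Nat.divide g n -> (Nat.divide g (x mod n) <-> Nat.divide g x).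
Proof.
  intros Hg. pose proof (Nat.div_mod_eq x n) as H0. split; intro H1.
  - rewrite H0. apply Nat.divide_add_r; auto. apply Nat.divide_mul_l; auto.
  - apply (Nat.divide_add_cancel_r _ (n * (x / n))). apply Nat.divide_mul_l; auto.
    rewrite <- H0; auto.
Qed.

Lemma mod_add_multiple_mod n m u d : (0 < m)%nat -> Nat.divide m n -> Nat.divide m d ->
  (((u + d) mod n) mod m = u mod m)%nat.
Proof. intros Hm Hmn [k ->]. rewrite mod_mod_divide by auto. apply Nat.Div0.mod_add. Qed.

Lemma mul_add_inj M x y x' y' : (0 < M)%nat -> (y < M)%nat -> (y' < M)%nat ->
  (x * M + y = x' * M + y')%nat -> x = x' /\ y = y'.
Proof.
  intros HM Hy Hy' E.
  assert (y = y').
  { rewrite <- (Nat.mod_small y M), <- (Nat.mod_small y' M) by auto.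
    rewrite <- (Nat.Div0.mod_add y x M), <- (Nat.Div0.mod_add y' x' M). f_equal. lia. }
  subst. split; auto. apply (Nat.mul_cancel_r _ _ M); lia.
Qed.

Lemma list_sum_repeat x k : list_sum (repeat x k) = (k * x)%nat.
Proof. induction k; simpl; try rewrite IHk; lia. Qed.

Lemma hd_in_nonempty {A} (l : list A) d : l <> [] -> In (hd d l) l.
Proof. destruct l; [congruence|left; auto]. Qed.

Lemma repeat_nonempty {A} (x : A) k : (0 < k)%nat -> repeat x k <> [].
Proof. destruct k; simpl; [lia | discriminate]. Qed.

Definition offset (n u v : nat) : nat := ((v + n - u) mod n)%nat.

Lemma circ_offset n a u v : circ n a u v = a (offset n u v).
Proof. reflexivity. Qed.

Section Offsets.

Variable n : nat.
Hypothesis n_pos : (0 < n)%nat.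

Lemma offset_lt u v : (offset n u v < n)%nat.
Proof. unfold offset. apply Nat.mod_upper_bound. lia. Qed.

Lemma offset_add_mod u d : (u < n)%nat -> (d < n)%nat -> offset n u ((u + d) mod n) = d.
Proof.
  intros. unfold offset. rewrite <- (Nat.mod_small d n) at 2 by lia.
  div_mod_facts (u + d)%nat n. apply (mod_eq_of_add_mul _ _ _ ((u + d) / n) 1). nia.
Qed.

Lemma add_offset_mod u v : (u < n)%nat -> (v < n)%nat -> ((u + offset n u v) mod n = v)%nat.
Proof.
  intros. unfold offset. rewrite <- (Nat.mod_small v n) at 2 by lia.
  div_mod_facts (v + n - u)%nat n.
  apply (mod_eq_of_add_mul _ _ _ ((v + n - u) / n) 1). generalize_div_mod. nia.
Qed.

Lemma offset_translate u v c : (u < n)%nat -> (v < n)%nat ->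
  offset n ((u + c) mod n) ((v + c) mod n) = offset n u v.
Proof.
  intros. unfold offset. div_mod_facts (u + c)%nat n. div_mod_facts (v + c)%nat n.
  apply (mod_eq_of_add_mul _ _ _ ((v + c) / n) ((u + c) / n)). generalize_div_mod. nia.
Qed.

Lemma divide_offset_of_mod_eq m u v : (0 < m)%nat -> Nat.divide m n -> (u < n)%nat ->
  (u mod m = v mod m)%nat -> Nat.divide m (offset n u v).
Proof.
  intros Hm Hmn Hu E. unfold offset. apply divide_mod_iff; auto. apply Nat.Lcm0.mod_divide.
  assert (H : (((v + n - u) + u) mod m = (0 + u) mod m)%nat).
  { replace (v + n - u + u)%nat with (v + n)%nat by lia. simpl. rewrite E.
    destruct Hmn as [k ->]. rewrite Nat.Div0.mod_add. auto. }
  apply mod_add_cancel_r in H; auto. rewrite H. apply Nat.Div0.mod_0_l.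
Qed.

Lemma comp_nodes_translate m r1 r2 v : (0 < m)%nat -> Nat.divide m n ->
  (r1 < m)%nat -> (r2 < m)%nat ->
  comp_nodes n m r1 v -> comp_nodes n m r2 ((v + (r2 + n - r1)) mod n).
Proof.
  intros Hm [k Hk] H1 H2 [Hv Hvr]. split. apply Nat.mod_upper_bound; lia.
  rewrite mod_mod_divide by (auto; exists k; auto). rewrite <- (Nat.mod_small r2 m) at 2 by auto.
  pose proof (Nat.div_mod_eq v m). apply (mod_eq_of_add_mul _ _ _ 0 (v / m + k)).
  rewrite Hvr in H. nia.
Qed.

Fixpoint walk_nodes (v : nat) (ds : list nat) : list nat :=
  match ds with [] => [] | d :: ds' => v :: walk_nodes ((v + d) mod n) ds' end.
Fixpoint walk_end (v : nat) (ds : list nat) : nat :=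
  match ds with [] => v | d :: ds' => walk_end ((v + d) mod n) ds' end.
Fixpoint walk_edges (v : nat) (ds : list nat) : list (nat * nat) :=
  match ds with [] => [] | d :: ds' => (v, (v + d) mod n) :: walk_edges ((v + d) mod n) ds' end.

Lemma walk_nodes_length v ds : length (walk_nodes v ds) = length ds.
Proof. revert v; induction ds; simpl; auto. Qed.

Lemma walk_end_sum v ds : (v < n)%nat -> walk_end v ds = ((v + list_sum ds) mod n)%nat.
Proof.
  revert v; induction ds as [|d ds IH]; intros v Hv; simpl.
  - rewrite Nat.add_0_r, Nat.mod_small; auto.
  - rewrite IH by (apply Nat.mod_upper_bound; lia).
    rewrite Nat.Div0.add_mod_idemp_l. f_equal. lia.
Qed.

Lemma walk_end_repeat v t : (v < n)%nat -> walk_end v (repeat t n) = v.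
Proof.
  intros. rewrite walk_end_sum, list_sum_repeat by auto.
  rewrite <- (Nat.mod_small v n) at 2 by auto. apply (mod_eq_of_add_mul _ _ _ 0 t). lia.
Qed.

Lemma cycle_edges_cons v rest : cycle_edges (v :: rest) = combine (v :: rest) (rest ++ [v]).
Proof. reflexivity. Qed.

Lemma combine_walk_nodes v ds : ds <> [] ->
  combine (walk_nodes v ds) (tl (walk_nodes v ds) ++ [walk_end v ds]) = walk_edges v ds.
Proof.
  revert v; induction ds as [|d ds IH]; intros v Hne; [congruence|].
  destruct ds as [|d' ds']; [reflexivity|].
  specialize (IH ((v + d) mod n)%nat ltac:(discriminate)). simpl in IH |- *. f_equal. exact IH.
Qed.

Lemma cycle_edges_walk_nodes v ds : ds <> [] -> walk_end v ds = v ->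
  cycle_edges (walk_nodes v ds) = walk_edges v ds.
Proof.
  intros Hne He. pose proof (combine_walk_nodes v ds Hne) as H. rewrite He in H.
  destruct ds; [congruence|]. exact H.
Qed.

Lemma walk_nodes_lt v ds : (v < n)%nat -> Forall (fun x => x < n)%nat (walk_nodes v ds).
Proof.
  revert v; induction ds; intros; simpl; constructor; auto.
  apply IHds. apply Nat.mod_upper_bound; lia.
Qed.

Lemma walk_edges_offsets v ds : (v < n)%nat -> Forall (fun x => x < n)%nat ds ->
  map (fun e => offset n (fst e) (snd e)) (walk_edges v ds) = ds.
Proof.
  revert v; induction ds; intros v Hv Hds; simpl; auto. inversion Hds; subst.
  f_equal. apply offset_add_mod; auto. apply IHds; auto. apply Nat.mod_upper_bound; lia.
Qed.

Lemma walk_nodes_comp_nodes m r ds v : (0 < m)%nat -> Nat.divide m n ->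
  Forall (Nat.divide m) ds -> (v < n)%nat -> (v mod m = r)%nat ->
  Forall (comp_nodes n m r) (walk_nodes v ds).
Proof.
  intros Hm Hmn. revert v. induction ds as [|d ds IH]; intros v Hds Hv Hvr; simpl; constructor.
  - split; auto.
  - inversion Hds; subst. apply IH; auto. apply Nat.mod_upper_bound; lia.
    rewrite mod_add_multiple_mod; auto.
Qed.

Lemma cycle_edges_length (c : list nat) : c <> [] -> length (cycle_edges c) = length c.
Proof.
  intro. destruct c; [congruence|].
  rewrite cycle_edges_cons, length_combine, length_app. simpl length.
  rewrite Nat.add_1_r, Nat.min_id. reflexivity.
Qed.

Lemma path_offsets_sum v rest w : Forall (fun x => x < n)%nat (v :: rest) -> (w < n)%nat ->
  ((v + list_sum (map (fun e => offset n (fst e) (snd e)) (combine (v :: rest) (rest ++ [w]))))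
     mod n = w)%nat.
Proof.
  revert v; induction rest as [|x rest IH]; intros v Hf Hw; inversion Hf; subst.
  - simpl. rewrite Nat.add_0_r. apply add_offset_mod; auto.
  - simpl combine. simpl map. simpl list_sum.
    specialize (IH x H2 Hw). simpl in IH.
    rewrite Nat.add_assoc, <- Nat.Div0.add_mod_idemp_l, add_offset_mod; auto. inversion H2; auto.
Qed.

Lemma cycle_offsets_sum c : c <> [] -> Forall (fun x => x < n)%nat c ->
  (list_sum (map (fun e => offset n (fst e) (snd e)) (cycle_edges c)) mod n = 0)%nat.
Proof.
  intros Hc Hf. destruct c as [|v rest]; [congruence|]. rewrite cycle_edges_cons.
  pose proof (path_offsets_sum v rest v Hf ltac:(inversion Hf; auto)) as H.
  match goal with |- (?X mod n = 0)%nat =>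
    enough (G : (X mod n = 0 mod n)%nat) by (rewrite G; apply Nat.Div0.mod_0_l) end.
  apply (mod_add_cancel_r n _ v 0 n_pos). rewrite Nat.add_comm, H. simpl.
  rewrite Nat.mod_small; auto. inversion Hf; auto.
Qed.

End Offsets.

Lemma prod_repeat x k : fold_right Rmult 1 (repeat x k) = x ^ k.
Proof. induction k; simpl; try rewrite IHk; ring. Qed.

Lemma prod_const (l : list R) x : Forall (fun w => w = x) l -> fold_right Rmult 1 l = x ^ length l.
Proof. induction 1; simpl; auto. rewrite IHForall, H. ring. Qed.

Lemma prod_map_const (a : nat -> R) lam ds : Forall (fun d => a d = lam) ds ->
  fold_right Rmult 1 (map a ds) = lam ^ length ds.
Proof. intro. rewrite <- (length_map a). apply prod_const. apply Forall_map; auto. Qed.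

Lemma prod_pos (ws : list R) L : Forall (fun w => 0 < w <= L) ws -> 0 < fold_right Rmult 1 ws.
Proof. induction 1; simpl. lra. destruct H. apply Rmult_lt_0_compat; auto. Qed.

Lemma prod_le_pow (ws : list R) L : Forall (fun w => 0 < w <= L) ws ->
  fold_right Rmult 1 ws <= L ^ length ws.
Proof.
  intro H. induction H; simpl. lra. destruct H.
  apply Rmult_le_compat; try lra. apply Rlt_le, prod_pos with L; auto.
Qed.

Lemma prod_lt_pow (ws : list R) L : Forall (fun w => 0 < w <= L) ws -> Exists (fun w => w < L) ws ->
  fold_right Rmult 1 ws < L ^ length ws.
Proof.
  intros H HE. induction H as [|x l Hx H IH]. inversion HE. simpl. destruct Hx as [Hx1 Hx2].
  pose proof (prod_le_pow _ _ H). pose proof (prod_pos _ _ H).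
  inversion HE as [? ? Hlt|? ? HE']; subst.
  - apply Rle_lt_trans with (x * L ^ length l). apply Rmult_le_compat_l; lra.
    apply Rmult_lt_compat_r; auto. apply pow_lt; lra.
  - pose proof (IH HE').
    apply Rle_lt_trans with (L * fold_right Rmult 1 l). apply Rmult_le_compat_r; lra.
    apply Rmult_lt_compat_l; lra.
Qed.

Lemma Rpower_pow_inv x k : 0 < x -> (0 < k)%nat -> Rpower (x ^ k) (/ INR k) = x.
Proof.
  intros Hx Hk. rewrite <- Rpower_pow by auto. rewrite Rpower_mult, Rinv_r, Rpower_1; auto.
  apply not_0_INR. lia.
Qed.

Lemma in_cycle_edges (c : list nat) u v : In (u, v) (cycle_edges c) -> In u c /\ In v c.
Proof.
  destruct c as [|x c']. simpl; tauto. rewrite cycle_edges_cons. intro H. split.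
  - eapply in_combine_l; eauto.
  - apply in_combine_r, in_app_or in H. destruct H as [H|[H|[]]]; [right; auto | left; auto].
Qed.

Section GcdClosure.
Local Open Scope nat_scope.

Lemma closed_under_gcd n (P : nat -> Prop) : (0 < n)%nat ->
  (forall x y, P x -> P y -> P (x + y)%nat) -> (forall x j, P (x + j * n)%nat -> P x) ->
  forall a b, (0 < a)%nat -> (forall k, P (k * a)%nat) -> (forall k, P (k * b)%nat) ->
  forall k, P (k * Nat.gcd a b)%nat.
Proof.
  intros Hn Hadd Hmod a b Ha Pa Pb k.
  destruct (Nat.gcd_bezout_pos a b Ha) as [u [v Huv]].
  apply (Hmod _ (k * v * b)).
  replace (k * Nat.gcd a b + k * v * b * n)%nat with ((k * u) * a + (k * v * (n - 1)) * b)%nat.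
  - apply Hadd; auto.
  - replace (k * u * a)%nat with (k * (u * a))%nat by ring. rewrite Huv.
    destruct n; [lia|]. replace (S n - 1)%nat with n by lia. ring.
Qed.

Lemma gcd_list_divide_n n ps : Nat.divide (gcd_list n ps) n.
Proof.
  induction ps; simpl. apply Nat.divide_refl.
  eapply Nat.divide_trans; [apply Nat.gcd_divide_r|]; auto.
Qed.

Lemma gcd_list_divide_in n ps p : In p ps -> Nat.divide (gcd_list n ps) p.
Proof.
  induction ps; simpl; [tauto|]. intros [H|H]. subst; apply Nat.gcd_divide_l.
  eapply Nat.divide_trans; [apply Nat.gcd_divide_r|]; auto.
Qed.

Lemma gcd_list_pos n ps : (0 < n)%nat -> (0 < gcd_list n ps)%nat.
Proof.
  intros Hn. destruct (gcd_list n ps) eqn:E; [|lia].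
  pose proof (gcd_list_divide_n n ps) as [k Hk]. rewrite E in Hk. lia.
Qed.

Lemma gcd_list_greatest n ps d : Nat.divide d n -> (forall p, In p ps -> Nat.divide d p) ->
  Nat.divide d (gcd_list n ps).
Proof. induction ps; simpl; intros; auto. apply Nat.gcd_greatest; auto. Qed.

Lemma closed_under_gcd_list n (P : nat -> Prop) ps : (0 < n)%nat ->
  (forall x y, P x -> P y -> P (x + y)%nat) -> (forall x j, P (x + j * n)%nat -> P x) ->
  (forall k, P (k * n)%nat) -> (forall p, In p ps -> forall k, P (k * p)%nat) ->
  forall k, P (k * gcd_list n ps)%nat.
Proof.
  intros Hn Hadd Hmod Pn. induction ps as [|p ps IH]; intros Hps; simpl; auto.
  rewrite Nat.gcd_comm. apply (closed_under_gcd n); auto.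
  - apply gcd_list_pos; auto.
  - apply IH. intros; apply Hps; simpl; auto.
  - apply Hps; simpl; auto.
Qed.

End GcdClosure.

(** * Pigeonhole and reduced offset sums *)

Lemma pigeonhole_nat N (f : nat -> nat) : (forall i, i <= N -> f i < N)%nat ->
  exists i j, (i < j <= N)%nat /\ f i = f j.
Proof.
  intro Hf. set (l := map f (seq 0 (S N))).
  assert (Hnth : forall i, (i <= N)%nat -> nth i l 0%nat = f i).
  { intros i Hi. unfold l. rewrite (nth_indep _ _ (f 0%nat)) by (rewrite length_map, length_seq; lia).
    rewrite map_nth, seq_nth by lia. reflexivity. }
  destruct (NoDup_dec Nat.eq_dec l) as [Hnd|Hnd].
  - exfalso. assert (Hincl : incl l (seq 0 N)).
    { intros x Hx. unfold l in Hx. apply in_map_iff in Hx. destruct Hx as [i [<- Hi]].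
      apply in_seq in Hi. apply in_seq. specialize (Hf i ltac:(lia)). lia. }
    pose proof (NoDup_incl_length Hnd Hincl). unfold l in H. rewrite length_map, !length_seq in H. lia.
  - apply (not_NoDup dec_eq_nat) in Hnd. destruct Hnd as [x [l1 [l2 [l3 Hl]]]].
    assert (Hlen : length l = S N) by (unfold l; rewrite length_map, length_seq; auto).
    exists (length l1), (length l1 + S (length l2))%nat.
    assert (Hl' : length l = (length l1 + S (length l2) + S (length l3))%nat)
      by (rewrite Hl, !length_app; simpl; rewrite length_app; simpl; lia).
    split; [lia|].
    rewrite <- !Hnth by lia. rewrite Hl, !app_nth2 by lia.
    replace (length l1 + S (length l2) - length l1)%nat with (S (length l2)) by lia.
    simpl. rewrite app_nth2, !Nat.sub_diag; auto.
Qed.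

Lemma split_invariant_block (K : list nat -> nat) N l : (N <= length l)%nat ->
  (forall i, i <= N -> K (firstn i l) < N)%nat ->
  exists l1 R l2, l = l1 ++ R ++ l2 /\ R <> [] /\ (length R <= N)%nat /\ K l1 = K (l1 ++ R).
Proof.
  intros HN HK. destruct (pigeonhole_nat N (fun i => K (firstn i l)) HK) as [i [j [Hij Hf]]].
  exists (firstn i l), (firstn (j - i) (skipn i l)), (skipn j l).
  assert (Ej : firstn j l = firstn i l ++ firstn (j - i) (skipn i l)).
  { rewrite <- (firstn_skipn i (firstn j l)). rewrite firstn_firstn, skipn_firstn_comm.
    f_equal. f_equal. lia. }
  assert (HR : length (firstn (j - i) (skipn i l)) = (j - i)%nat)
    by (rewrite length_firstn, length_skipn; lia).
  split; [|split; [|split]].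
  - rewrite app_assoc, <- Ej. symmetry. apply firstn_skipn.
  - intro E. rewrite E in HR. simpl in HR. lia.
  - lia.
  - rewrite <- Ej. auto.
Qed.

(* Pigeonhole on the pairs (sum mod n, length mod M) of the prefixes of ns. *)
Lemma zero_sum_block n M ns : (0 < n)%nat -> (0 < M)%nat -> (n * M <= length ns)%nat ->
  exists l1 R l2, ns = l1 ++ R ++ l2 /\ R <> [] /\
    (list_sum R mod n = 0)%nat /\ Nat.divide M (length R).
Proof.
  intros Hn HM Hlen.
  destruct (split_invariant_block (fun l => ((list_sum l mod n) * M + length l mod M)%nat) (n * M) ns)
    as [l1 [R [l2 [Ens [HR [_ HK]]]]]]; auto.
  { intros i _. pose proof (Nat.mod_upper_bound (list_sum (firstn i ns)) n ltac:(lia)).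
    pose proof (Nat.mod_upper_bound (length (firstn i ns)) M ltac:(lia)). nia. }
  apply mul_add_inj in HK; [|auto|apply Nat.mod_upper_bound; lia|apply Nat.mod_upper_bound; lia].
  destruct HK as [HK1 HK2]. rewrite list_sum_app in HK1. rewrite length_app in HK2.
  exists l1, R, l2. repeat split; auto.
  - replace (list_sum l1) with (list_sum l1 + 0)%nat in HK1 at 1 by lia.
    rewrite !(Nat.add_comm (list_sum l1)) in HK1. apply mod_add_cancel_r in HK1; auto.
    rewrite <- HK1. apply Nat.Div0.mod_0_l.
  - apply Nat.Lcm0.mod_divide.
    replace (length l1) with (length l1 + 0)%nat in HK2 at 1 by lia.
    rewrite !(Nat.add_comm (length l1)) in HK2. apply mod_add_cancel_r in HK2; auto.
    rewrite <- HK2. apply Nat.Div0.mod_0_l.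
Qed.

Lemma exists_least_nat (P : nat -> Prop) : (exists k, P k) ->
  exists k, P k /\ forall j, (j < k)%nat -> ~ P j.
Proof.
  intros [k Hk]. induction k as [k IH] using (well_founded_induction lt_wf).
  destruct (classic (exists j, (j < k)%nat /\ P j)) as [[j [Hj Pj]]|H].
  - apply (IH j); auto.
  - exists k. split; auto. intros j Hj Pj. apply H. eauto.
Qed.

Section ReducedSums.
Local Open Scope nat_scope.

Variables (n : nat) (D : nat -> Prop) (s0 : nat).
Hypothesis n_pos : 0 < n.
Hypothesis s0_in : D s0.
Hypothesis s0_lt : s0 < n.

(* Some c offsets d_i in D have sum of (d_i - s0) congruent to y mod n; the term
   c * (n - s0) stands for - c * s0 without truncated subtraction. *)
Definition reduced_sum (c y : nat) : Prop := exists l, length l = c /\ Forall D l /\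
  (list_sum l + c * (n - s0)) mod n = y mod n.

Lemma reduced_sum_mod c y y' : y mod n = y' mod n -> reduced_sum c y -> reduced_sum c y'.
Proof. intros E [l [H1 [H2 H3]]]. exists l. rewrite <- E. auto. Qed.

Lemma reduced_sum_succ c y : reduced_sum c y -> reduced_sum (S c) y.
Proof.
  intros [l [Hl [Hc Hm]]]. exists (s0 :: l). split; [simpl; auto|split; [constructor; auto|]].
  rewrite <- Hm. simpl list_sum.
  apply (mod_eq_of_add_mul _ _ _ 0 1). remember (n - s0) as t. assert (n = s0 + t) by lia.
  subst n. nia.
Qed.

Lemma reduced_sum_le c c' y : c <= c' -> reduced_sum c y -> reduced_sum c' y.
Proof. induction 1; auto. intro; apply reduced_sum_succ; auto. Qed.

Lemma reduced_sum_add c1 c2 y1 y2 : reduced_sum c1 y1 -> reduced_sum c2 y2 ->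
  reduced_sum (c1 + c2) (y1 + y2).
Proof.
  intros [l1 [H1 [C1 M1]]] [l2 [H2 [C2 M2]]]. exists (l1 ++ l2).
  split; [rewrite length_app; lia|split; [apply Forall_app; auto|]].
  rewrite list_sum_app, (Nat.Div0.add_mod y1), <- M1, <- M2, <- Nat.Div0.add_mod.
  f_equal. nia.
Qed.

(* A block of the list whose reduced sum vanishes can be cut out. *)
Lemma reduced_sum_shorten c y : n < c -> reduced_sum c y ->
  exists c', c - n <= c' < c /\ reduced_sum c' y.
Proof.
  intros Hc [l [Hl [Hcr Hm]]].
  set (K := fun l => (list_sum l + length l * (n - s0)) mod n).
  destruct (split_invariant_block K n l) as [l1 [R [l2 [E [HR [HRl HK]]]]]];
    [lia|intros; apply Nat.mod_upper_bound; lia|].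
  unfold K in HK.
  assert (HRm : (list_sum R + length R * (n - s0)) mod n = 0).
  { rewrite list_sum_app, length_app in HK.
    replace (list_sum l1 + list_sum R + (length l1 + length R) * (n - s0))
      with ((list_sum R + length R * (n - s0)) + (list_sum l1 + length l1 * (n - s0))) in HK by ring.
    replace (list_sum l1 + length l1 * (n - s0))
      with (0 + (list_sum l1 + length l1 * (n - s0))) in HK at 1 by lia.
    symmetry in HK. apply mod_add_cancel_r in HK; auto. rewrite HK. apply Nat.Div0.mod_0_l. }
  assert (HRlen : length R > 0) by (destruct R; simpl; [congruence|lia]).
  exists (c - length R). split; [lia|].
  exists (l1 ++ l2). subst l. rewrite !length_app in *. split; [lia|].
  split; [rewrite !Forall_app in *; tauto|].
  rewrite <- Hm, !list_sum_app.
  replace (list_sum l1 + (list_sum R + list_sum l2) + c * (n - s0))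
    with ((list_sum l1 + list_sum l2 + (c - length R) * (n - s0)) + (list_sum R + length R * (n - s0))).
  - symmetry. apply add_mod0_r; auto.
  - assert (c - length R + length R = c) by lia. rewrite <- H at 2. ring.
Qed.

Lemma reduced_sum_n c y : reduced_sum c y -> reduced_sum n y.
Proof.
  induction c as [c IH] using (well_founded_induction lt_wf). intro H.
  destruct (le_lt_dec c n) as [Hle|Hlt]; [eapply reduced_sum_le; eauto|].
  destruct (reduced_sum_shorten _ _ Hlt H) as [c' [Hc' H']]. apply (IH c'); auto. lia.
Qed.

Lemma reduced_sum_ge_n c c' y : n <= c' -> reduced_sum c y -> reduced_sum c' y.
Proof. intros. eapply reduced_sum_le; eauto. eapply reduced_sum_n; eauto. Qed.

Lemma reduced_sum_n_0 : reduced_sum n 0.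
Proof. apply (reduced_sum_n 0). exists []. simpl. auto. Qed.

Lemma reduced_sum_n_add y1 y2 : reduced_sum n y1 -> reduced_sum n y2 -> reduced_sum n (y1 + y2).
Proof. intros. apply (reduced_sum_n (n + n)). apply reduced_sum_add; auto. Qed.

Lemma reduced_sum_n_mul y k : reduced_sum n y -> reduced_sum n (k * y).
Proof.
  intros. induction k; [apply reduced_sum_n_0|].
  replace (S k * y) with (y + k * y) by ring. apply reduced_sum_n_add; auto.
Qed.

(* [reduced_sum n (k * (n - s0))] holds iff n offsets in D sum to - k * s0, i.e. iff
   (appending k copies of s0) there is a closed walk with n + k steps in D. *)
Definition is_walk_period (sigma : nat) : Prop :=
  0 < sigma /\ forall k, reduced_sum n (k * (n - s0)) <-> Nat.divide sigma k.

Lemma walk_period_exists : exists sigma, is_walk_period sigma.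
Proof.
  destruct (exists_least_nat (fun k => 0 < k /\ reduced_sum n (k * (n - s0))))
    as [sg [[Hsg HD] Hmin]].
  { exists n. split; auto. apply (reduced_sum_mod _ 0); [|apply reduced_sum_n_0].
    rewrite (Nat.mul_comm n), Nat.Div0.mod_mul, Nat.Div0.mod_0_l. reflexivity. }
  exists sg. split; auto. intro k. split.
  - intro Hk. destruct (Nat.eq_dec (k mod sg) 0) as [E|E].
    + exists (k / sg). pose proof (Nat.div_mod_eq k sg). lia.
    + exfalso. apply (Hmin (k mod sg)); [apply Nat.mod_upper_bound; lia|]. split; [lia|].
      pose proof (reduced_sum_n_mul _ ((n - 1) * (k / sg)) HD) as H2.
      eapply reduced_sum_mod; [|exact (reduced_sum_n_add _ _ Hk H2)].
      apply (mod_eq_of_add_mul _ _ _ 0 ((k / sg) * sg * (n - s0))).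
      pose proof (Nat.div_mod_eq k sg).
      remember (k / sg) as q. remember (k mod sg) as r. destruct n; [lia|].
      replace (S n0 - 1) with n0 by lia. rewrite H at 1. ring.
  - intros [q ->]. replace (q * sg * (n - s0)) with (q * (sg * (n - s0))) by ring.
    apply reduced_sum_n_mul; auto.
Qed.

Variable sigma : nat.
Hypothesis sigma_period : is_walk_period sigma.

Lemma walk_period_divide_closed l : Forall D l -> list_sum l mod n = 0 ->
  Nat.divide sigma (length l).
Proof.
  intros Hl Hsum. apply sigma_period. apply (reduced_sum_n (length l)).
  exists l. split; auto. split; auto. rewrite Nat.add_comm. apply add_mod0_r; auto.
Qed.

Lemma closed_walk_exists L : Nat.divide sigma L -> n <= L ->
  exists l, length l = L /\ Forall D l /\ list_sum l mod n = 0.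
Proof.
  intros HL HnL. apply sigma_period in HL.
  apply (reduced_sum_ge_n _ L) in HL; auto. destruct HL as [l [H1 [H2 H3]]].
  exists l. split; auto. split; auto.
  replace (L * (n - s0)) with (0 + L * (n - s0)) in H3 at 2 by lia.
  apply mod_add_cancel_r in H3; auto. rewrite H3. apply Nat.Div0.mod_0_l.
Qed.

Lemma resize_by_period cs c' : Forall D cs -> (c' = length cs + sigma \/ length cs = c' + sigma) ->
  n <= c' -> exists cs', length cs' = c' /\ Forall D cs' /\ list_sum cs' mod n = list_sum cs mod n.
Proof.
  intros Hcs Hc Hnc. destruct sigma_period as [Hsg Hiff]. set (c := length cs).
  assert (E : reduced_sum c (list_sum cs + c * (n - s0))) by (exists cs; auto).
  assert (Hfin : reduced_sum c' (list_sum cs + c' * (n - s0))).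
  { destruct Hc as [Hc|Hc].
    - assert (Hd : reduced_sum n (sigma * (n - s0))) by (apply Hiff, Nat.divide_refl).
      pose proof (reduced_sum_add _ _ _ _ E Hd) as H. apply (reduced_sum_ge_n _ c') in H; auto.
      eapply reduced_sum_mod; [|exact H]. f_equal. subst c'. fold c. ring.
    - assert (Hd : reduced_sum n ((n - 1) * sigma * (n - s0))) by (apply Hiff, Nat.divide_factor_r).
      pose proof (reduced_sum_add _ _ _ _ E Hd) as H. apply (reduced_sum_ge_n _ c') in H; auto.
      eapply reduced_sum_mod; [|exact H].
      apply (mod_eq_of_add_mul _ _ _ 0 (sigma * (n - s0))). fold c in Hc. rewrite Hc.
      destruct n; [lia|]. replace (S n0 - 1) with n0 by lia. ring. }
  destruct Hfin as [l [H1 [H2 H3]]]. exists l. split; auto. split; auto.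
  apply mod_add_cancel_r in H3; auto.
Qed.

Lemma walk_period_s0_0 : s0 = 0 -> sigma = 1.
Proof.
  intro E. destruct sigma_period as [_ Hiff]. apply Nat.divide_1_r, Hiff.
  apply (reduced_sum_mod _ 0); [|apply reduced_sum_n_0].
  rewrite E, Nat.sub_0_r, Nat.mul_1_l, Nat.Div0.mod_same, Nat.Div0.mod_0_l. reflexivity.
Qed.

End ReducedSums.

(** * The gcd formulas *)

Section DivisibilityFacts.
Local Open Scope nat_scope.

Lemma div_mul_swap x y z : Nat.divide y x -> Nat.divide y z -> (x / y) * z = x * (z / y).
Proof.
  intros [a ->] [b ->]. destruct y; [simpl; rewrite !Nat.mul_0_r; auto|].
  rewrite !Nat.div_mul by lia. ring.
Qed.

Lemma div_chain x y z : Nat.divide y z -> Nat.divide z x -> 0 < y -> x / y = (x / z) * (z / y).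
Proof.
  intros [a ->] [b ->] Hy.
  destruct a as [|a]; [rewrite !Nat.mul_0_l, Nat.mul_0_r, Nat.Div0.div_0_l; auto|].
  rewrite Nat.div_mul by lia. rewrite Nat.mul_assoc, !Nat.div_mul by lia. auto.
Qed.

Lemma mul_divide_of_divide_div F x y : Nat.divide y x -> Nat.divide F (x / y) ->
  Nat.divide (F * y) x.
Proof.
  intros [a ->] HF. destruct y; [rewrite Nat.mul_0_r; exists 0; auto|].
  rewrite Nat.div_mul in HF by lia. apply Nat.mul_divide_mono_r. auto.
Qed.

Lemma divide_div_of_mul_divide F x y : 0 < y -> Nat.divide (F * y) x -> Nat.divide F (x / y).
Proof. intros Hy [k ->]. rewrite Nat.mul_assoc, Nat.div_mul by lia. apply Nat.divide_factor_r. Qed.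

Lemma divide_div_div x y z : Nat.divide y z -> Nat.divide z x -> Nat.divide (z / y) (x / y).
Proof.
  intros [a ->] [b ->]. destruct y; [rewrite !Nat.mul_0_r; simpl; apply Nat.divide_refl|].
  rewrite Nat.mul_assoc, !Nat.div_mul by lia. apply Nat.divide_factor_r.
Qed.

Lemma coprime_divide_l F A B : Nat.divide F A -> Nat.gcd A B = 1 -> Nat.gcd F B = 1.
Proof.
  intros HF H. apply Nat.divide_1_r. rewrite <- H. apply Nat.gcd_greatest.
  - eapply Nat.divide_trans; [apply Nat.gcd_divide_l|auto].
  - apply Nat.gcd_divide_r.
Qed.

Lemma coprime_mul_r F x y : Nat.gcd F x = 1 -> Nat.gcd F y = 1 -> Nat.gcd F (x * y) = 1.
Proof.
  intros Hx Hy. set (c := Nat.gcd F (x * y)).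
  assert (Hc1 : Nat.divide c F) by apply Nat.gcd_divide_l.
  assert (Hc2 : Nat.divide c (x * y)) by apply Nat.gcd_divide_r.
  assert (Nat.gcd c x = 1) by (apply (coprime_divide_l _ F); auto).
  assert (Nat.divide c y) by (apply (Nat.gauss _ x); auto).
  apply Nat.divide_1_r. rewrite <- Hy. apply Nat.gcd_greatest; auto.
Qed.

Lemma fold_gcd_divide_init b l : Nat.divide (fold_right Nat.gcd b l) b.
Proof.
  induction l; simpl; [apply Nat.divide_refl|].
  eapply Nat.divide_trans; [apply Nat.gcd_divide_r|auto].
Qed.

Lemma fold_gcd_divide_in b l x : In x l -> Nat.divide (fold_right Nat.gcd b l) x.
Proof.
  induction l; simpl; [tauto|]. intros [<-|H]; [apply Nat.gcd_divide_l|].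
  eapply Nat.divide_trans; [apply Nat.gcd_divide_r|auto].
Qed.

Lemma fold_gcd_greatest b l d : Nat.divide d b -> (forall x, In x l -> Nat.divide d x) ->
  Nat.divide d (fold_right Nat.gcd b l).
Proof. induction l; simpl; intros; auto. apply Nat.gcd_greatest; auto. Qed.

Lemma gcd_list_snoc n l x : gcd_list n (l ++ [x]) = Nat.gcd (gcd_list n l) x.
Proof.
  induction l; simpl; [apply Nat.gcd_comm|].
  unfold gcd_list in *. rewrite IHl. apply Nat.gcd_assoc.
Qed.

Lemma firstn_snoc (l : list nat) i : S i < length l ->
  firstn (S (S i)) l = firstn (S i) l ++ [nth (S i) l 0].
Proof.
  revert i; induction l as [|x l IH]; intros i H; [simpl in H; lia|]. destruct i as [|i].
  - destruct l as [|y l]; [simpl in H; lia|reflexivity].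
  - rewrite firstn_cons, (firstn_cons (S i)), IH by (simpl in H; lia). reflexivity.
Qed.

Lemma StronglySorted_gt_nth (ps : list nat) i j : StronglySorted gt ps -> i < j < length ps ->
  nth j ps 0 < nth i ps 0.
Proof.
  revert i j; induction ps as [|x l IH]; intros i j Hs Hij; simpl in *; [lia|].
  apply StronglySorted_inv in Hs. destruct Hs as [Hs Hf]. destruct i, j; try lia.
  - rewrite Forall_forall in Hf. apply Hf, nth_In. lia.
  - apply IH; auto. lia.
Qed.

Lemma StronglySorted_gt_le_hd (ps : list nat) q : StronglySorted gt ps -> In q ps -> q <= hd 0 ps.
Proof.
  intros Hs Hq. apply In_nth with (d := 0) in Hq. destruct Hq as [i [Hi <-]].
  destruct i; [destruct ps; simpl; lia|]. apply Nat.lt_le_incl.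
  replace (hd 0 ps) with (nth 0 ps 0) by (destruct ps; reflexivity).
  apply StronglySorted_gt_nth; auto. lia.
Qed.

Lemma in_combine_tl (ps : list nat) i : S i < length ps ->
  In (nth i ps 0, nth (S i) ps 0) (combine ps (tl ps)).
Proof.
  revert i; induction ps as [|x l IH]; intros i H; simpl in *; [lia|].
  destruct l as [|y l]; simpl in *; [lia|]. destruct i; [left; auto|].
  right. apply (IH i). simpl. lia.
Qed.

Lemma in_combine_tl_inv (ps : list nat) p q : In (p, q) (combine ps (tl ps)) -> In p ps /\ In q ps.
Proof.
  intro H. split; [eapply in_combine_l; eauto|].
  apply in_combine_r in H. destruct ps; simpl in *; auto.
Qed.

End DivisibilityFacts.

(* With 0-based indices, [pk ps i] is the paper's p_(i+1) and [gk n ps i] is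
   gcd(n, p_1, ..., p_(i+1)). *)
Definition pk (ps : list nat) (i : nat) : nat := nth i ps 0%nat.
Definition gk (n : nat) (ps : list nat) (i : nat) : nat := gcd_list n (firstn (S i) ps).

Definition gcd_diffs (n : nat) (ps : list nat) : nat :=
  fold_right Nat.gcd n (map (fun q => hd 0 ps - q)%nat ps).

Section PeriodFormulas.
Local Open Scope nat_scope.

Lemma pk_in ps i : i < length ps -> In (pk ps i) ps.
Proof. apply nth_In. Qed.

Lemma pk_in_firstn ps i j : i < j -> j <= length ps -> In (pk ps i) (firstn j ps).
Proof.
  intros Hij Hj. unfold pk.
  assert (E : nth i (firstn j ps) 0 = nth i ps 0)
    by (rewrite nth_firstn; apply Nat.ltb_lt in Hij; rewrite Hij; auto).
  rewrite <- E. apply nth_In. rewrite length_firstn. lia.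
Qed.

Lemma in_pk ps q : In q ps -> exists i, i < length ps /\ q = pk ps i.
Proof. intro H. apply In_nth with (d := 0) in H. destruct H as [i [Hi Hq]]. exists i. auto. Qed.

Lemma pk_0 ps : pk ps 0 = hd 0 ps.
Proof. destruct ps; reflexivity. Qed.

Lemma gk_succ n ps i : S i < length ps -> gk n ps (S i) = Nat.gcd (gk n ps i) (pk ps (S i)).
Proof. intro. unfold gk. rewrite firstn_snoc by auto. apply gcd_list_snoc. Qed.

Lemma gk_last n ps : ps <> [] -> gk n ps (length ps - 1) = gcd_list n ps.
Proof.
  intro. unfold gk. destruct ps as [|p ps]; [congruence|].
  replace (S (length (p :: ps) - 1)) with (length (p :: ps)) by (simpl; lia).
  rewrite firstn_all. auto.
Qed.

Lemma gk_0 n ps : ps <> [] -> gk n ps 0 = Nat.gcd n (hd 0 ps).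
Proof. intro. unfold gk. destruct ps; [congruence|]. simpl. apply Nat.gcd_comm. Qed.

Lemma gk_divide_gk n ps i j : i <= j -> Nat.divide (gk n ps j) (gk n ps i).
Proof.
  intro. unfold gk. apply gcd_list_greatest; [apply gcd_list_divide_n|].
  intros p Hp. apply gcd_list_divide_in.
  rewrite <- (firstn_skipn (S i) (firstn (S j) ps)), firstn_firstn.
  apply in_or_app. left. replace (Init.Nat.min (S i) (S j)) with (S i) by lia. auto.
Qed.

Lemma gcd_diffs_divide_n n ps : Nat.divide (gcd_diffs n ps) n.
Proof. apply fold_gcd_divide_init. Qed.

Lemma gcd_diffs_divide_diff n ps q : In q ps -> Nat.divide (gcd_diffs n ps) (hd 0 ps - q).
Proof. intro. apply fold_gcd_divide_in. apply in_map_iff. eauto. Qed.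

Lemma in_formula3_terms n ps x :
  In x (map (fun j => (hd 0 ps - nth (j - 1) ps 0) / gcd_list n (firstn j ps)) (seq 2 (length ps - 1))) ->
  exists i, 1 <= i < length ps /\ x = (hd 0 ps - pk ps i) / gk n ps i.
Proof.
  intros Hx. apply in_map_iff in Hx. destruct Hx as [j [<- Hj]]. apply in_seq in Hj.
  exists (j - 1). split; [lia|]. unfold pk, gk. replace (S (j - 1)) with j by lia. auto.
Qed.

Lemma formula3_divide_terms n ps i : i < length ps ->
  Nat.divide (per_formula3 n ps) ((hd 0 ps - pk ps i) / gk n ps i).
Proof.
  intros Hi. destruct i.
  - rewrite <- pk_0, Nat.sub_diag, Nat.Div0.div_0_l. apply Nat.divide_0_r.
  - unfold per_formula3. apply fold_gcd_divide_in, in_map_iff. exists (S (S i)). split.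
    + unfold pk, gk. replace (S (S i) - 1) with (S i) by lia. auto.
    + apply in_seq. lia.
Qed.

Variables (n : nat) (ps : list nat).
Hypothesis n_pos : 0 < n.
Hypothesis ps_nonempty : ps <> [].
Hypothesis ps_sorted : StronglySorted gt ps.
Hypothesis ps_range : forall p, In p ps -> 1 <= p < n.

Lemma le_hd q : In q ps -> q <= hd 0 ps.
Proof. apply StronglySorted_gt_le_hd, ps_sorted. Qed.

Lemma gk_pos i : 0 < gk n ps i.
Proof. apply gcd_list_pos, n_pos. Qed.

Lemma gk_divide_pk i j : i <= j -> j < length ps -> Nat.divide (gk n ps j) (pk ps i).
Proof. intros Hij Hj. apply gcd_list_divide_in, pk_in_firstn; lia. Qed.

Lemma gk_divide_hd i : i < length ps -> Nat.divide (gk n ps i) (hd 0 ps).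
Proof. intro. rewrite <- pk_0. apply gk_divide_pk; lia. Qed.

Lemma formula1_divide_formula3 : Nat.divide (per_formula1 n ps) (per_formula3 n ps).
Proof.
  unfold per_formula3. apply fold_gcd_greatest; [apply fold_gcd_divide_init|].
  intros x Hx. apply in_formula3_terms in Hx. destruct Hx as [i [Hi ->]].
  assert (Hgi := gk_divide_pk 0 i ltac:(lia) ltac:(lia)).
  assert (Hgq := gk_divide_pk i i ltac:(lia) ltac:(lia)).
  destruct ps as [|p1 rest]; [congruence|].
  assert (Hq : In (pk (p1 :: rest) i) rest).
  { unfold pk. destruct i; [lia|]. simpl. apply nth_In. simpl in Hi. lia. }
  assert (Hd : Nat.divide (per_formula1 n (p1 :: rest))
                 ((p1 - pk (p1 :: rest) i) / Nat.gcd p1 (pk (p1 :: rest) i))).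
  { unfold per_formula1. apply fold_gcd_divide_in. simpl tl. apply in_map_iff. eexists; split; eauto. }
  simpl hd. rewrite (div_chain _ _ (Nat.gcd p1 (pk (p1 :: rest) i))).
  - apply Nat.divide_mul_l. exact Hd.
  - apply Nat.gcd_greatest; auto.
  - apply Nat.divide_sub_r; [apply Nat.gcd_divide_l|apply Nat.gcd_divide_r].
  - apply gcd_list_pos; auto.
Qed.

(* Telescoping p_1 - p_(i+1) = (p_1 - p_i) + (p_i - p_(i+1)). *)
Lemma formula2_mul_gk_divide F :
  (forall p q, In (p, q) (combine ps (tl ps)) -> Nat.divide F ((p - q) / Nat.gcd p q)) ->
  forall i, i < length ps -> Nat.divide (F * gk n ps i) (hd 0 ps - pk ps i).
Proof.
  intros HF. induction i; intro Hi.
  - rewrite <- pk_0, Nat.sub_diag. apply Nat.divide_0_r.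
  - rewrite gk_succ by auto. set (g' := Nat.gcd (gk n ps i) (pk ps (S i))).
    assert (Hlt : pk ps (S i) < pk ps i) by (apply StronglySorted_gt_nth; auto; lia).
    assert (Hle : pk ps i <= hd 0 ps) by (apply le_hd, pk_in; lia).
    replace (hd 0 ps - pk ps (S i)) with ((hd 0 ps - pk ps i) + (pk ps i - pk ps (S i))) by lia.
    assert (Hg'1 : Nat.divide g' (gk n ps i)) by apply Nat.gcd_divide_l.
    apply Nat.divide_add_r.
    + eapply Nat.divide_trans; [|apply IHi; lia]. apply Nat.mul_divide_mono_l. auto.
    + assert (Hz : Nat.divide g' (Nat.gcd (pk ps i) (pk ps (S i)))).
      { apply Nat.gcd_greatest; [|apply Nat.gcd_divide_r].
        eapply Nat.divide_trans; [exact Hg'1|]. apply gk_divide_pk; lia. }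
      eapply Nat.divide_trans; [apply Nat.mul_divide_mono_l; exact Hz|].
      apply mul_divide_of_divide_div.
      * apply Nat.divide_sub_r; [apply Nat.gcd_divide_l|apply Nat.gcd_divide_r].
      * apply HF. apply in_combine_tl. auto.
Qed.

Lemma formula2_divide_formula3 : Nat.divide (per_formula2 n ps) (per_formula3 n ps).
Proof.
  unfold per_formula3. apply fold_gcd_greatest; [apply fold_gcd_divide_init|].
  intros x Hx. apply in_formula3_terms in Hx. destruct Hx as [i [Hi ->]].
  apply divide_div_of_mul_divide; [apply gk_pos|]. apply formula2_mul_gk_divide; [|lia].
  intros p q Hpq. unfold per_formula2. apply fold_gcd_divide_in, in_map_iff. exists (p, q). auto.
Qed.

Lemma coprime_formula3_gk_ratio i : i < length ps ->
  Nat.gcd (per_formula3 n ps) (gk n ps 0 / gk n ps i) = 1.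
Proof.
  set (F := per_formula3 n ps). induction i; intro Hi.
  - rewrite Nat.div_same by (pose proof (gk_pos 0); lia).
    apply Nat.divide_1_r, Nat.gcd_divide_r.
  - set (g' := gk n ps (S i)).
    assert (Hg'pos : 0 < g') by apply gk_pos.
    assert (Hg'i : Nat.divide g' (gk n ps i)) by (apply gk_divide_gk; lia).
    rewrite (div_chain _ _ (gk n ps i)); auto; [|apply gk_divide_gk; lia].
    apply coprime_mul_r; [apply IHi; lia|].
    set (c := Nat.gcd F (gk n ps i / g')).
    assert (Hc1 : Nat.divide c F) by apply Nat.gcd_divide_l.
    assert (Hc2 : Nat.divide c (gk n ps i / g')) by apply Nat.gcd_divide_r.
    set (p1 := hd 0 ps). set (q := pk ps (S i)).
    assert (Hgp1 : Nat.divide g' p1) by (apply gk_divide_hd; auto).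
    assert (Hgq : Nat.divide g' q) by (apply gk_divide_pk; auto).
    assert (Hip1 : Nat.divide (gk n ps i) p1) by (apply gk_divide_hd; lia).
    assert (Hqle : q <= p1) by (apply le_hd, pk_in; auto).
    assert (HcA : Nat.divide c (p1 / g'))
      by (eapply Nat.divide_trans; [exact Hc2|]; apply divide_div_div; auto).
    assert (HcAB : Nat.divide c (p1 / g' - q / g')).
    { eapply Nat.divide_trans; [exact Hc1|]. destruct Hgp1 as [A HA]. destruct Hgq as [B HB].
      pose proof (formula3_divide_terms n ps (S i) Hi) as HF. fold F g' p1 q in HF.
      rewrite HA, HB in *. rewrite !Nat.div_mul by lia.
      rewrite <- Nat.mul_sub_distr_r, Nat.div_mul in HF by lia. auto. }
    assert (HcB : Nat.divide c (q / g')).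
    { replace (q / g') with (p1 / g' - (p1 / g' - q / g')).
      - apply Nat.divide_sub_r; auto.
      - assert (q / g' <= p1 / g') by (apply Nat.Div0.div_le_mono; auto). lia. }
    apply Nat.divide_1_r.
    rewrite <- (Nat.gcd_div_gcd (gk n ps i) q g') by (unfold g'; try lia; apply gk_succ; auto).
    apply Nat.gcd_greatest; auto.
Qed.

Lemma formula3_mul_gcd_list_divide_gcd_diffs :
  Nat.divide (per_formula3 n ps * gcd_list n ps) (gcd_diffs n ps).
Proof.
  set (F := per_formula3 n ps). set (m := gcd_list n ps).
  assert (HmG : forall i, Nat.divide m (gk n ps i)).
  { intro i. apply gcd_list_greatest; [apply gcd_list_divide_n|]. intros p Hp.
    apply gcd_list_divide_in. rewrite <- (firstn_skipn (S i) ps). apply in_or_app. auto. }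
  apply fold_gcd_greatest.
  - assert (Hmh : Nat.divide m (Nat.gcd n (hd 0 ps))).
    { rewrite <- gk_0 by auto. apply HmG. }
    eapply Nat.divide_trans; [apply Nat.mul_divide_mono_l; exact Hmh|].
    apply mul_divide_of_divide_div; [apply Nat.gcd_divide_l|apply fold_gcd_divide_init].
  - intros x Hx. apply in_map_iff in Hx. destruct Hx as [q [<- Hq]].
    apply in_pk in Hq. destruct Hq as [i [Hi ->]].
    eapply Nat.divide_trans; [apply Nat.mul_divide_mono_l, (HmG i)|].
    apply mul_divide_of_divide_div; [|apply formula3_divide_terms; auto].
    apply Nat.divide_sub_r; [apply gk_divide_hd|apply gk_divide_pk]; lia.
Qed.

Lemma coprime_formula3_hd_div_gcd_list :
  Nat.gcd (per_formula3 n ps) (hd 0 ps / gcd_list n ps) = 1.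
Proof.
  set (F := per_formula3 n ps). set (p1 := hd 0 ps). set (h := Nat.gcd n p1).
  assert (Hp1 : In p1 ps) by (unfold p1; destruct ps; [congruence|left; auto]).
  assert (Hp1pos : 1 <= p1) by (apply ps_range; auto).
  assert (Hhpos : 0 < h)
    by (unfold h; destruct (Nat.gcd n p1) eqn:E; [apply Nat.gcd_eq_0 in E; lia|lia]).
  assert (Hc1 : Nat.gcd F (p1 / h) = 1).
  { apply (coprime_divide_l _ (n / h)); [apply fold_gcd_divide_init|].
    apply (Nat.gcd_div_gcd n p1 h); auto. lia. }
  assert (Hc2 : Nat.gcd F (h / gcd_list n ps) = 1).
  { pose proof (coprime_formula3_gk_ratio (length ps - 1)) as Hc.
    rewrite gk_last, gk_0 in Hc by auto. apply Hc. destruct ps; [congruence|simpl; lia]. }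
  rewrite (div_chain _ _ h); [apply coprime_mul_r; auto| |apply Nat.gcd_divide_r|].
  - unfold h, p1. rewrite <- gk_0, <- (gk_last n ps) by auto. apply gk_divide_gk. lia.
  - apply gcd_list_pos; auto.
Qed.

Variable sigma : nat.
Hypothesis sigma_spec : forall k, Nat.divide sigma k <-> Nat.divide (gcd_diffs n ps) (k * hd 0 ps).

Lemma sigma_divide_first : Nat.divide sigma (n / Nat.gcd n (hd 0 ps)).
Proof.
  apply sigma_spec. rewrite div_mul_swap by (apply Nat.gcd_divide_l || apply Nat.gcd_divide_r).
  apply Nat.divide_mul_l, gcd_diffs_divide_n.
Qed.

Lemma sigma_divide_pair p q : In p ps -> In q ps -> Nat.divide sigma ((p - q) / Nat.gcd p q).
Proof.
  intros Hp Hq. apply sigma_spec. pose proof (le_hd p Hp). pose proof (le_hd q Hq).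
  set (e := (p - q) / Nat.gcd p q). set (p1 := hd 0 ps) in *.
  replace (e * p1) with (e * p + e * (p1 - p)) by (rewrite <- Nat.mul_add_distr_l; f_equal; lia).
  apply Nat.divide_add_r.
  - unfold e. rewrite div_mul_swap.
    + apply Nat.divide_mul_l. replace (p - q) with ((p1 - q) - (p1 - p)) by lia.
      apply Nat.divide_sub_r; apply gcd_diffs_divide_diff; auto.
    + apply Nat.divide_sub_r; [apply Nat.gcd_divide_l|apply Nat.gcd_divide_r].
    + apply Nat.gcd_divide_l.
  - apply Nat.divide_mul_r, gcd_diffs_divide_diff; auto.
Qed.

Lemma sigma_divide_formula1 : Nat.divide sigma (per_formula1 n ps).
Proof.
  unfold per_formula1. apply fold_gcd_greatest; [apply sigma_divide_first|].
  intros x Hx. apply in_map_iff in Hx. destruct Hx as [q [<- Hq]].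
  apply sigma_divide_pair; [destruct ps; [congruence|left; auto]|destruct ps; simpl in *; auto].
Qed.

Lemma sigma_divide_formula2 : Nat.divide sigma (per_formula2 n ps).
Proof.
  unfold per_formula2. apply fold_gcd_greatest; [apply sigma_divide_first|].
  intros x Hx. apply in_map_iff in Hx. destruct Hx as [[p q] [<- Hpq]].
  apply in_combine_tl_inv in Hpq. apply sigma_divide_pair; tauto.
Qed.

Lemma sigma_divide_formula3 : Nat.divide sigma (per_formula3 n ps).
Proof.
  unfold per_formula3. apply fold_gcd_greatest; [apply sigma_divide_first|].
  intros x Hx. apply in_formula3_terms in Hx. destruct Hx as [i [Hi ->]].
  apply sigma_spec. rewrite div_mul_swap.
  - apply Nat.divide_mul_l, gcd_diffs_divide_diff, pk_in. lia.
  - apply Nat.divide_sub_r; [apply gk_divide_hd|apply gk_divide_pk]; lia.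
  - apply gk_divide_hd. lia.
Qed.

(* F * m divides gcd_diffs, which divides sigma * p_1, and F is coprime to p_1 / m,
   where F is the third formula and m = gcd_list n ps. *)
Lemma formula3_divide_sigma : Nat.divide (per_formula3 n ps) sigma.
Proof.
  set (F := per_formula3 n ps). set (p1 := hd 0 ps). set (m := gcd_list n ps).
  assert (Hmpos : 0 < m) by (apply gcd_list_pos; auto).
  assert (Hp1 : In p1 ps) by (unfold p1; destruct ps; [congruence|left; auto]).
  assert (H1 : Nat.divide (F * m) ((sigma * (p1 / m)) * m)).
  { eapply Nat.divide_trans; [apply formula3_mul_gcd_list_divide_gcd_diffs|].
    destruct (gcd_list_divide_in n ps p1 Hp1) as [k Hk]. fold m in Hk.
    replace ((sigma * (p1 / m)) * m) with (sigma * p1).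
    - apply sigma_spec, Nat.divide_refl.
    - rewrite Hk, Nat.div_mul by lia. ring. }
  apply Nat.mul_divide_cancel_r in H1; [|lia].
  apply (Nat.gauss _ (p1 / m)); [rewrite Nat.mul_comm; auto|].
  apply coprime_formula3_hd_div_gcd_list.
Qed.

Lemma period_formulas :
  sigma = per_formula1 n ps /\ sigma = per_formula2 n ps /\ sigma = per_formula3 n ps.
Proof.
  assert (E3 : sigma = per_formula3 n ps)
    by (apply Nat.divide_antisym; [apply sigma_divide_formula3|apply formula3_divide_sigma]).
  split; [|split; [|exact E3]]; apply Nat.divide_antisym.
  - apply sigma_divide_formula1.
  - rewrite E3. apply formula1_divide_formula3.
  - apply sigma_divide_formula2.
  - rewrite E3. apply formula2_divide_formula3.
Qed.

End PeriodFormulas.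

(** * The critical digraph of a circulant matrix *)

Definition crit_offset (n : nat) (a : nat -> R) (lam : R) (d : nat) : Prop :=
  (d < n)%nat /\ a d = lam.

Section Circulant.

Variables (n : nat) (a : nat -> R) (lam : R).
Hypothesis n_pos : (0 < n)%nat.
Hypothesis a_nonneg : forall t, (t < n)%nat -> 0 <= a t.
Hypothesis lam_is_lambda : is_lambda n (circ n a) lam.

Lemma cycle_weight_walk v ds : (v < n)%nat -> Forall (fun x => x < n)%nat ds ->
  ds <> [] -> walk_end n v ds = v ->
  cycle_weight (circ n a) (walk_nodes n v ds) = fold_right Rmult 1 (map a ds).
Proof.
  intros. unfold cycle_weight. rewrite cycle_edges_walk_nodes by auto.
  rewrite <- (walk_edges_offsets n n_pos v ds) at 2 by auto. rewrite map_map. reflexivity.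
Qed.

Lemma walk_is_cycle v ds : (v < n)%nat -> Forall (fun x => x < n)%nat ds ->
  ds <> [] -> walk_end n v ds = v -> Forall (fun d => a d <> 0) ds ->
  is_cycle n (circ n a) (walk_nodes n v ds).
Proof.
  intros Hv Hds Hne He Ha. split; [|split].
  - destruct ds; simpl; congruence.
  - apply walk_nodes_lt; auto.
  - rewrite cycle_edges_walk_nodes by auto.
    rewrite <- (walk_edges_offsets n n_pos v ds) in Ha by auto.
    rewrite Forall_map in Ha. exact Ha.
Qed.

Lemma lam_pos : 0 < lam.
Proof.
  destruct lam_is_lambda as [[c [_ <-]] _]. unfold cycle_mean, Rpower. apply exp_pos.
Qed.

(* The loop [v -> v + t -> ... -> v] of length n has mean [a t]. *)
Lemma a_le_lam t : (t < n)%nat -> a t <= lam.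
Proof.
  intro Ht. pose proof lam_pos. destruct lam_is_lambda as [_ Hl].
  destruct (Req_dec (a t) 0) as [H0|H0]; [lra|].
  assert (Hat : 0 < a t) by (pose proof (a_nonneg t Ht); lra).
  assert (Hf : Forall (fun x => x < n)%nat (repeat t n))
    by (apply Forall_forall; intros x Hx; apply repeat_spec in Hx; lia).
  assert (Hne := repeat_nonempty t n n_pos).
  assert (He := walk_end_repeat n n_pos 0 t n_pos).
  pose proof (Hl (walk_nodes n 0 (repeat t n))) as Hc.
  unfold cycle_mean in Hc.
  rewrite cycle_weight_walk, walk_nodes_length, map_repeat, prod_repeat, repeat_length,
    Rpower_pow_inv in Hc; auto.
  apply Hc, walk_is_cycle; auto.
  apply Forall_forall; intros x Hx; apply repeat_spec in Hx; subst; auto.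
Qed.

Lemma cycle_edge_weight_bounds c : is_cycle n (circ n a) c ->
  Forall (fun e => 0 < circ n a (fst e) (snd e) <= lam) (cycle_edges c).
Proof.
  intros [Hc [Hl He]]. apply Forall_forall. intros [u v] Hin.
  destruct (in_cycle_edges _ _ _ Hin) as [Hu Hv].
  rewrite Forall_forall in Hl, He. specialize (Hl u Hu). specialize (He _ Hin). simpl in *.
  rewrite circ_offset in *. pose proof (offset_lt n n_pos u v).
  pose proof (a_nonneg _ H). pose proof (a_le_lam _ H). lra.
Qed.

Lemma cycle_mean_lt c : is_cycle n (circ n a) c ->
  Exists (fun e => circ n a (fst e) (snd e) < lam) (cycle_edges c) -> cycle_mean (circ n a) c < lam.
Proof.
  intros Hc HE. pose proof lam_pos. pose proof (cycle_edge_weight_bounds c Hc) as Hp.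
  assert (Hne : c <> []) by apply Hc.
  unfold cycle_mean, cycle_weight.
  set (ws := map (fun e => circ n a (fst e) (snd e)) (cycle_edges c)).
  assert (Hw : Forall (fun w => 0 < w <= lam) ws) by (unfold ws; apply Forall_map; auto).
  assert (HwE : Exists (fun w => w < lam) ws) by (unfold ws; apply Exists_map; auto).
  assert (Hlen : length ws = length c)
    by (unfold ws; rewrite length_map; apply cycle_edges_length; auto).
  pose proof (prod_lt_pow _ _ Hw HwE). pose proof (prod_pos _ _ Hw).
  assert (Hk : (0 < length c)%nat) by (destruct c; simpl; [congruence|lia]).
  rewrite <- (Rpower_pow_inv lam (length c)) by auto.
  apply Rlt_Rpower_l. apply Rinv_0_lt_compat, lt_0_INR; auto.
  rewrite <- Hlen. split; auto.
Qed.

Lemma crit_cycle_edge_weights c : crit_cycle n (circ n a) lam c ->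
  Forall (fun e => circ n a (fst e) (snd e) = lam) (cycle_edges c).
Proof.
  intros [Hc Hm]. apply NNPP. intro HF.
  apply neg_Forall_Exists_neg in HF; [|intro x; apply Req_EM_T].
  enough (Exists (fun e => circ n a (fst e) (snd e) < lam) (cycle_edges c))
    by (pose proof (cycle_mean_lt c Hc H); lra).
  pose proof (cycle_edge_weight_bounds c Hc) as Hp. rewrite Forall_forall in Hp.
  rewrite Exists_exists in *. destruct HF as [e [He1 He2]]. exists e. split; auto.
  specialize (Hp e He1). lra.
Qed.

Lemma crit_walk_cycle v ds : (v < n)%nat -> Forall (crit_offset n a lam) ds ->
  ds <> [] -> walk_end n v ds = v -> crit_cycle n (circ n a) lam (walk_nodes n v ds).
Proof.
  intros Hv Hds Hne He. pose proof lam_pos.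
  assert (Hlt : Forall (fun x => x < n)%nat ds)
    by (eapply Forall_impl; [|exact Hds]; intros x [? ?]; auto).
  assert (Hal : Forall (fun d => a d = lam) ds)
    by (eapply Forall_impl; [|exact Hds]; intros x [? ?]; auto).
  split.
  - apply walk_is_cycle; auto. eapply Forall_impl; [|exact Hal]. intros; lra.
  - assert (Hk : (0 < length ds)%nat) by (destruct ds; simpl; [congruence|lia]).
    unfold cycle_mean. rewrite cycle_weight_walk, (prod_map_const a lam) by auto.
    rewrite walk_nodes_length, Rpower_pow_inv; auto.
Qed.

Lemma crit_loop v d : (v < n)%nat -> crit_offset n a lam d ->
  crit_cycle n (circ n a) lam (walk_nodes n v (repeat d n)).
Proof.
  intros Hv Hd. apply crit_walk_cycle; auto.
  - apply Forall_forall; intros x Hx; apply repeat_spec in Hx; subst; auto.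
  - apply repeat_nonempty; auto.
  - apply walk_end_repeat; auto.
Qed.

Lemma crit_edge_iff u v :
  crit_edge n (circ n a) lam u v <-> (u < n)%nat /\ (v < n)%nat /\ a (offset n u v) = lam.
Proof.
  split.
  - intros [c [Hc Hin]]. destruct (in_cycle_edges _ _ _ Hin) as [Hu Hv].
    pose proof (crit_cycle_edge_weights c Hc) as He. rewrite Forall_forall in He.
    destruct Hc as [[_ [Hl _]] _]. rewrite Forall_forall in Hl.
    split; [auto|split; [auto|]]. apply (He _ Hin).
  - intros [Hu [Hv Ha]]. exists (walk_nodes n u (repeat (offset n u v) n)). split.
    + apply crit_loop; auto. split; auto. apply offset_lt; auto.
    + rewrite cycle_edges_walk_nodes by (apply repeat_nonempty || apply walk_end_repeat; auto).
      destruct n as [|n']; [lia|]. cbn [repeat walk_edges]. left. f_equal.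
      apply add_offset_mod; auto.
Qed.

Lemma crit_edge_add u d : (u < n)%nat -> crit_offset n a lam d ->
  crit_edge n (circ n a) lam u ((u + d) mod n).
Proof.
  intros Hu [Hd Had]. apply crit_edge_iff. split; auto. split.
  - apply Nat.mod_upper_bound; lia.
  - rewrite offset_add_mod; auto.
Qed.

Lemma walk_edges_crit v ds : (v < n)%nat -> Forall (crit_offset n a lam) ds ->
  Forall (fun e => crit_edge n (circ n a) lam (fst e) (snd e)) (walk_edges n v ds).
Proof.
  revert v; induction ds as [|d ds IH]; intros v Hv Hds; simpl; [constructor|].
  inversion Hds; subst. constructor.
  - apply crit_edge_add; auto.
  - apply IH; auto. apply Nat.mod_upper_bound; lia.
Qed.

Lemma crit_offset_exists : exists t, crit_offset n a lam t.
Proof.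
  apply NNPP. intro Hno. destruct lam_is_lambda as [[c [Hc Hm]] _].
  assert (Hall : forall u w, (u < n)%nat -> circ n a u w < lam).
  { intros u w Hu. rewrite circ_offset. assert (Ho := offset_lt n n_pos u w).
    pose proof (a_le_lam _ Ho). destruct (Req_dec (a (offset n u w)) lam); [|lra].
    exfalso. apply Hno. exists (offset n u w). split; auto. }
  enough (Exists (fun e => circ n a (fst e) (snd e) < lam) (cycle_edges c))
    by (pose proof (cycle_mean_lt c Hc H); lra).
  destruct Hc as [Hne [Hl Hw]]. destruct c as [|v rest]; [congruence|].
  rewrite cycle_edges_cons. inversion Hl as [|v0 l0 Hv Hrest].
  destruct rest as [|x0 rest]; simpl; constructor; simpl; apply Hall; auto.
Qed.

Definition crit_reach := clos_refl_trans nat (crit_edge n (circ n a) lam).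

Lemma crit_reach_mul p : crit_offset n a lam p ->
  forall k u, (u < n)%nat -> crit_reach u ((u + k * p) mod n).
Proof.
  intros Hp. induction k; intros u Hu.
  - simpl. rewrite Nat.add_0_r, Nat.mod_small by auto. apply rt_refl.
  - apply rt_trans with ((u + p) mod n)%nat.
    + apply rt_step, crit_edge_add; auto.
    + replace ((u + S k * p) mod n)%nat with ((((u + p) mod n) + k * p) mod n)%nat.
      * apply IHk. apply Nat.mod_upper_bound; lia.
      * rewrite Nat.Div0.add_mod_idemp_l. f_equal. lia.
Qed.

Lemma crit_reach_gcd_list ps : (forall p, In p ps -> crit_offset n a lam p) ->
  forall k u, (u < n)%nat -> crit_reach u ((u + k * gcd_list n ps) mod n).
Proof.
  intros Hps.
  set (Q := fun y => forall u, (u < n)%nat -> crit_reach u ((u + y) mod n)).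
  enough (forall k, Q (k * gcd_list n ps)%nat) by (intros; apply H; auto).
  apply closed_under_gcd_list; auto; unfold Q.
  - intros x y Hx Hy u Hu. apply rt_trans with ((u + x) mod n)%nat; [apply Hx; auto|].
    replace ((u + (x + y)) mod n)%nat with ((((u + x) mod n) + y) mod n)%nat.
    + apply Hy. apply Nat.mod_upper_bound; lia.
    + rewrite Nat.Div0.add_mod_idemp_l. f_equal. lia.
  - intros x j Hx u Hu. specialize (Hx u Hu). rewrite Nat.add_assoc, Nat.Div0.mod_add in Hx. auto.
  - intros k u Hu. rewrite Nat.Div0.mod_add, Nat.mod_small by auto. apply rt_refl.
  - intros p Hp k u Hu. apply crit_reach_mul; auto.
Qed.

Lemma crit_reach_mod m u v : (0 < m)%nat -> Nat.divide m n ->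
  (forall d, crit_offset n a lam d -> Nat.divide m d) -> crit_reach u v -> (u mod m = v mod m)%nat.
Proof.
  intros Hm Hmn Hcd Hr. induction Hr; auto; [|congruence].
  apply crit_edge_iff in H. destruct H as [Hx [Hy Ha]].
  rewrite <- (add_offset_mod n n_pos x y) by auto. rewrite mod_add_multiple_mod; auto.
  apply Hcd. split; auto. apply offset_lt; auto.
Qed.

Lemma crit_node_all v : (v < n)%nat -> crit_node n (circ n a) lam v.
Proof.
  intros Hv. destruct crit_offset_exists as [s Hs].
  exists (walk_nodes n v (repeat s n)). split; [apply crit_loop; auto|].
  destruct n; [lia|]. left; auto.
Qed.

Lemma crit_edge_translate u v c : (u < n)%nat -> (v < n)%nat ->
  crit_edge n (circ n a) lam u v <-> crit_edge n (circ n a) lam ((u + c) mod n) ((v + c) mod n).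
Proof.
  intros Hu Hv. rewrite !crit_edge_iff, offset_translate by auto.
  split; intros [? [? ?]]; repeat split; auto; apply Nat.mod_upper_bound; lia.
Qed.

Lemma crit_reach_of_mod_eq ps u v : (forall p, In p ps -> crit_offset n a lam p) ->
  (u < n)%nat -> (v < n)%nat -> (u mod gcd_list n ps = v mod gcd_list n ps)%nat -> crit_reach u v.
Proof.
  intros Hps Hu Hv E.
  destruct (divide_offset_of_mod_eq n n_pos _ u v (gcd_list_pos n ps n_pos) (gcd_list_divide_n n ps) Hu E)
    as [k Hk].
  pose proof (crit_reach_gcd_list ps Hps k u Hu) as R.
  rewrite <- Hk, add_offset_mod in R by auto. exact R.
Qed.

Section Components.

Variable ps : list nat.
Hypothesis ps_spec : forall t, In t ps <-> ((1 <= t < n)%nat /\ a t = lam).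

Lemma crit_offset_of_in p : In p ps -> crit_offset n a lam p.
Proof. intro Hp. apply ps_spec in Hp. split; [lia|tauto]. Qed.

Lemma gcd_list_divide_crit_offset d : crit_offset n a lam d -> Nat.divide (gcd_list n ps) d.
Proof.
  intros [Hd Had]. destruct d; [apply Nat.divide_0_r|].
  apply gcd_list_divide_in, ps_spec. split; [lia|auto].
Qed.

Lemma crit_scc_iff u v : (u < n)%nat -> (v < n)%nat ->
  crit_scc n (circ n a) lam u v <-> (u mod gcd_list n ps = v mod gcd_list n ps)%nat.
Proof.
  intros Hu Hv. split.
  - intros [_ [_ [Hr _]]]. apply (crit_reach_mod (gcd_list n ps)); auto.
    + apply gcd_list_pos; auto.
    + apply gcd_list_divide_n.
    + apply gcd_list_divide_crit_offset.
  - intro E. repeat split; try apply crit_node_all; auto;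
      apply (crit_reach_of_mod_eq ps); auto; apply crit_offset_of_in.
Qed.

Lemma crit_components_isomorphic r1 r2 : let m := gcd_list n ps in
  (r1 < m)%nat -> (r2 < m)%nat ->
  exists f : nat -> nat,
    (forall v, comp_nodes n m r1 v -> comp_nodes n m r2 (f v)) /\
    (forall u v, comp_nodes n m r1 u -> comp_nodes n m r1 v -> f u = f v -> u = v) /\
    (forall w, comp_nodes n m r2 w -> exists v, comp_nodes n m r1 v /\ f v = w) /\
    (forall u v, comp_nodes n m r1 u -> comp_nodes n m r1 v ->
       (crit_edge n (circ n a) lam u v <-> crit_edge n (circ n a) lam (f u) (f v))).
Proof.
  intros m Hr1 Hr2. pose proof (gcd_list_pos n ps n_pos). pose proof (gcd_list_divide_n n ps).
  assert (m <= n)%nat by (apply Nat.divide_pos_le; auto).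
  exists (fun v => ((v + (r2 + n - r1)) mod n)%nat). split; [|split; [|split]].
  - intros v Hv. apply comp_nodes_translate; auto.
  - intros u v [Hu _] [Hv _] E. apply mod_add_cancel_r in E; auto.
    rewrite !Nat.mod_small in E; auto.
  - intros w Hw. exists ((w + (r1 + n - r2)) mod n)%nat. split; [apply comp_nodes_translate; auto|].
    destruct Hw as [Hw _]. rewrite Nat.Div0.add_mod_idemp_l.
    rewrite <- (Nat.mod_small w n) at 2 by auto. apply (mod_eq_of_add_mul _ _ _ 0 2). lia.
  - intros u v [Hu _] [Hv _]. apply crit_edge_translate; auto.
Qed.

End Components.

(** * Max-algebraic powers and the period *)

Lemma fold_max_ge x l : In x l -> x <= fold_right Rmax 0 l.
Proof.
  induction l; simpl; [tauto|]. intros [<-|H]; [apply Rmax_l|].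
  eapply Rle_trans; [apply IHl; auto|apply Rmax_r].
Qed.

Lemma fold_max_nonneg l : 0 <= fold_right Rmax 0 l.
Proof. induction l; simpl; [lra|]. eapply Rle_trans; [exact IHl|apply Rmax_r]. Qed.

Lemma fold_max_cases l : fold_right Rmax 0 l = 0 \/ In (fold_right Rmax 0 l) l.
Proof.
  induction l as [|x l IHl]; simpl; auto. destruct (Rle_dec x (fold_right Rmax 0 l)).
  - rewrite Rmax_right by auto. destruct IHl as [E|E]; [left; auto|right; right; auto].
  - rewrite Rmax_left by lra. right; left; auto.
Qed.

Definition offset_weight (ds : list nat) : R := fold_right Rmult 1 (map (fun d => a d / lam) ds).

Lemma offset_weight_cons d l : offset_weight (d :: l) = a d / lam * offset_weight l.
Proof. reflexivity. Qed.

Lemma offset_weight_app l1 l2 : offset_weight (l1 ++ l2) = offset_weight l1 * offset_weight l2.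
Proof. unfold offset_weight. rewrite map_app. induction l1; simpl; [ring|]. rewrite IHl1. ring. Qed.

Lemma normalized_weight_bounds d : (d < n)%nat -> 0 <= a d / lam <= 1.
Proof.
  intros Hd. pose proof lam_pos. pose proof (a_nonneg d Hd). pose proof (a_le_lam d Hd).
  unfold Rdiv. split.
  - apply Rmult_le_pos; [lra|apply Rlt_le, Rinv_0_lt_compat; lra].
  - apply Rmult_le_reg_r with lam; auto. rewrite Rmult_assoc, Rinv_l; lra.
Qed.

Lemma offset_weight_bounds ds : Forall (fun d => d < n)%nat ds -> 0 <= offset_weight ds <= 1.
Proof.
  induction 1; unfold offset_weight in *; simpl; [lra|].
  pose proof (normalized_weight_bounds _ H). destruct IHForall. split.
  - apply Rmult_le_pos; lra.
  - apply Rle_trans with (a x / lam * 1); [apply Rmult_le_compat_l|]; lra.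
Qed.

Lemma offset_weight_crit ds : Forall (crit_offset n a lam) ds -> offset_weight ds = 1.
Proof.
  pose proof lam_pos. induction 1; unfold offset_weight in *; simpl; auto.
  rewrite IHForall. destruct H0 as [_ ->]. field. lra.
Qed.

Lemma offset_weight_lt_1 ds : Forall (fun d => d < n)%nat ds -> Exists (fun d => a d <> lam) ds ->
  offset_weight ds < 1.
Proof.
  intros Hds HE. pose proof lam_pos as Hl. induction Hds as [|x l Hx Hds IH]; [inversion HE|].
  pose proof (offset_weight_bounds _ Hds) as Hb. pose proof (normalized_weight_bounds _ Hx) as Hw.
  rewrite offset_weight_cons.
  inversion HE as [? ? Hne|? ? HE']; subst.
  - pose proof (a_nonneg x Hx). pose proof (a_le_lam x Hx).
    assert (a x / lam < 1).
    { apply Rmult_lt_reg_r with lam; auto. unfold Rdiv. rewrite Rmult_assoc, Rinv_l; lra. }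
    apply Rle_lt_trans with (a x / lam * 1); [apply Rmult_le_compat_l|]; lra.
  - pose proof (IH HE').
    apply Rle_lt_trans with (1 * offset_weight l); [apply Rmult_le_compat_r|]; lra.
Qed.

Local Notation B := (mscale (circ n a) lam).

Lemma mpow_nonneg t i j : 0 <= mpow n B t i j.
Proof. destruct t; simpl; [unfold mid; destruct (Nat.eqb i j); lra|apply fold_max_nonneg]. Qed.

Lemma mpow_ge_offset_weight ds i : (i < n)%nat -> Forall (fun d => d < n)%nat ds ->
  offset_weight ds <= mpow n B (length ds) i ((i + list_sum ds) mod n).
Proof.
  revert i. induction ds as [|d ds IH]; intros i Hi Hds.
  - simpl. rewrite Nat.add_0_r, Nat.mod_small by auto. unfold mid. rewrite Nat.eqb_refl.
    unfold offset_weight. simpl. lra.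
  - inversion Hds; subst. simpl length. simpl mpow. unfold mmul.
    assert (Hk : ((i + d) mod n < n)%nat) by (apply Nat.mod_upper_bound; lia).
    eapply Rle_trans; [|apply fold_max_ge, in_map_iff; exists ((i + d) mod n)%nat;
                        split; [reflexivity|apply in_seq; lia]].
    specialize (IH _ Hk H2). rewrite offset_weight_cons.
    replace ((i + (d + list_sum ds)) mod n)%nat with ((((i + d) mod n) + list_sum ds) mod n)%nat
      by (rewrite Nat.Div0.add_mod_idemp_l; f_equal; lia).
    unfold mscale. rewrite circ_offset, offset_add_mod by auto.
    apply Rmult_le_compat_l; auto. apply (normalized_weight_bounds _ H1).
Qed.

Lemma mpow_attained t i j : (i < n)%nat ->
  mpow n B t i j = 0 \/ exists ds, length ds = t /\ Forall (fun d => d < n)%nat ds /\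
    ((i + list_sum ds) mod n = j)%nat /\ offset_weight ds = mpow n B t i j.
Proof.
  revert i j. induction t as [|t IH]; intros i j Hi.
  - simpl. unfold mid. destruct (Nat.eqb i j) eqn:E; auto. apply Nat.eqb_eq in E. subst. right.
    exists []. simpl. rewrite Nat.add_0_r, Nat.mod_small by auto. unfold offset_weight. simpl. auto.
  - simpl. unfold mmul.
    destruct (fold_max_cases (map (fun k => B i k * mpow n B t k j) (seq 0 n))) as [E|E]; [left; auto|].
    rewrite in_map_iff in E. destruct E as [k [Ek Hk]]. apply in_seq in Hk.
    rewrite <- Ek. destruct (IH k j ltac:(lia)) as [E0|[ds [H1 [H2 [H3 H4]]]]].
    + left. rewrite E0. ring.
    + right. exists (offset n i k :: ds).
      split; [simpl; auto|split; [constructor; auto; apply offset_lt; auto|split]].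
      * simpl. rewrite Nat.add_assoc, <- Nat.Div0.add_mod_idemp_l, add_offset_mod by lia. auto.
      * rewrite offset_weight_cons, H4. reflexivity.
Qed.

Lemma mpow_le_1 t i j : (i < n)%nat -> mpow n B t i j <= 1.
Proof.
  intros Hi. destruct (mpow_attained t i j Hi) as [E|[ds [_ [H2 [_ <-]]]]]; [rewrite E; lra|].
  apply (offset_weight_bounds _ H2).
Qed.

Definition crit_offsetb (d : nat) : bool := if Req_EM_T (a d) lam then true else false.

Lemma crit_offset_dec d : {crit_offset n a lam d} + {~ crit_offset n a lam d}.
Proof.
  unfold crit_offset. destruct (lt_dec d n); [|right; tauto].
  destruct (Req_EM_T (a d) lam); [left|right]; tauto.
Qed.

Lemma partition_crit_offsets ds : Forall (fun d => d < n)%nat ds ->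
  let cs := filter crit_offsetb ds in let ns := filter (fun d => negb (crit_offsetb d)) ds in
  length ds = (length cs + length ns)%nat /\ list_sum ds = (list_sum cs + list_sum ns)%nat /\
  offset_weight ds = offset_weight cs * offset_weight ns /\
  Forall (crit_offset n a lam) cs /\ Forall (fun d => d < n)%nat ns.
Proof.
  induction 1 as [|d l Hd Hl IH]; simpl.
  { unfold offset_weight; simpl. repeat split; auto. ring. }
  destruct IH as [E1 [E2 [E3 [E4 E5]]]].
  destruct (crit_offsetb d) eqn:Ecb; simpl; rewrite !offset_weight_cons, E3.
  - assert (a d = lam) by (unfold crit_offsetb in Ecb; destruct (Req_EM_T (a d) lam); congruence).
    repeat split; try lia; try ring; auto. constructor; auto. split; auto.
  - repeat split; try lia; try ring; auto.
Qed.

Section Period.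

Variables (s0 sigma : nat).
Hypothesis s0_crit : crit_offset n a lam s0.
Hypothesis sigma_period : is_walk_period n (crit_offset n a lam) s0 sigma.

Let s0_lt : (s0 < n)%nat := proj1 s0_crit.

Lemma sigma_pos : (0 < sigma)%nat.
Proof. apply sigma_period. Qed.

Lemma crit_closed_walk_exists L : Nat.divide sigma L -> (n <= L)%nat ->
  exists l, length l = L /\ Forall (crit_offset n a lam) l /\ (list_sum l mod n = 0)%nat.
Proof. apply (closed_walk_exists n _ s0 n_pos s0_crit s0_lt sigma sigma_period). Qed.

Definition transient_bound : nat := (n + sigma + n * ((n + 1) * sigma))%nat.

(* If few steps of a long walk are critical, a zero-sum block of non-critical steps whose
   length is a multiple of (n + 1) * sigma is traded for a closed critical walk. *)
Lemma rearrange_walk ds : Forall (fun d => d < n)%nat ds -> (transient_bound <= length ds)%nat ->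
  exists cs ns, Forall (crit_offset n a lam) cs /\ Forall (fun d => d < n)%nat ns /\
    (n + sigma <= length cs)%nat /\ (length cs + length ns = length ds)%nat /\
    ((list_sum cs + list_sum ns) mod n = list_sum ds mod n)%nat /\
    offset_weight ds <= offset_weight ns.
Proof.
  intros Hds HT. pose proof sigma_pos.
  destruct (partition_crit_offsets ds Hds) as [E1 [E2 [E3 [E4 E5]]]].
  set (cs := filter crit_offsetb ds) in *. set (ns := filter (fun d => negb (crit_offsetb d)) ds) in *.
  rewrite (offset_weight_crit cs), Rmult_1_l in E3 by auto.
  destruct (le_lt_dec (n + sigma) (length cs)) as [Hle|Hlt].
  { exists cs, ns. rewrite E2, E3. repeat split; auto; lra. }
  set (M := ((n + 1) * sigma)%nat).
  destruct (zero_sum_block n M ns n_pos ltac:(unfold M; nia) ltac:(unfold transient_bound in HT; lia))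
    as [l1 [R [l2 [Ens [HR [HRs HMR]]]]]].
  assert (HRge : (M <= length R)%nat)
    by (apply Nat.divide_pos_le; auto; destruct R; simpl; [congruence|lia]).
  destruct (crit_closed_walk_exists (length R)) as [Z [HZ1 [HZ2 HZ3]]];
    [eapply Nat.divide_trans; [apply Nat.divide_factor_r|exact HMR]|unfold M in HRge; nia|].
  rewrite Ens, !Forall_app in E5. destruct E5 as [F1 [F2 F3]].
  exists (cs ++ Z), (l1 ++ l2). repeat split; try apply Forall_app; auto.
  - rewrite length_app. unfold M in HRge. nia.
  - rewrite E1, Ens, !length_app. lia.
  - rewrite E2, Ens, !list_sum_app.
    replace (list_sum cs + list_sum Z + (list_sum l1 + list_sum l2))%nat
      with ((list_sum cs + list_sum l1 + list_sum l2) + list_sum Z)%nat by ring.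
    replace (list_sum cs + (list_sum l1 + (list_sum R + list_sum l2)))%nat
      with ((list_sum cs + list_sum l1 + list_sum l2) + list_sum R)%nat by ring.
    rewrite (add_mod0_r n (list_sum Z)), (add_mod0_r n (list_sum R)) by auto. reflexivity.
  - rewrite E3, Ens, !offset_weight_app.
    pose proof (offset_weight_bounds _ F1). pose proof (offset_weight_bounds _ F2).
    pose proof (offset_weight_bounds _ F3).
    rewrite <- Rmult_assoc. apply Rmult_le_compat_r; [lra|].
    rewrite <- (Rmult_1_r (offset_weight l1)) at 2. apply Rmult_le_compat_l; lra.
Qed.

(* An optimal walk of length L, rearranged, has at least n + sigma critical steps, so its
   critical part can be resized by sigma without changing the endpoint or the weight. *)
Lemma mpow_le_shift L L' i j : (transient_bound <= L)%nat -> (L' = L + sigma \/ L = L' + sigma)%nat ->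
  (i < n)%nat -> mpow n B L i j <= mpow n B L' i j.
Proof.
  intros HT HL Hi.
  destruct (mpow_attained L i j Hi) as [E|[ds [Hl [Hds [Hj Hp]]]]]; [rewrite E; apply mpow_nonneg|].
  destruct (rearrange_walk ds Hds ltac:(lia)) as [cs [ns [Hcs [Hns [Hc [Hlen [Hsum Hpr]]]]]]].
  destruct (resize_by_period n _ s0 n_pos s0_crit s0_lt sigma sigma_period cs (length cs + L' - L))
    as [cs' [H1 [H2 H3]]]; auto; [lia|lia|].
  assert (Hds' : Forall (fun d => d < n)%nat (cs' ++ ns)).
  { apply Forall_app; split; auto. eapply Forall_impl; [|exact H2]. intros x [? ?]; auto. }
  pose proof (mpow_ge_offset_weight (cs' ++ ns) i Hi Hds') as Hup.
  rewrite length_app in Hup. replace (length cs' + length ns)%nat with L' in Hup by lia.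
  replace ((i + list_sum (cs' ++ ns)) mod n)%nat with j in Hup.
  - rewrite offset_weight_app, (offset_weight_crit cs') in Hup by auto. lra.
  - rewrite <- Hj, list_sum_app. apply mod_add_congr_l. rewrite <- Hsum.
    rewrite (Nat.Div0.add_mod (list_sum cs')), H3, <- Nat.Div0.add_mod. reflexivity.
Qed.

Lemma mpow_ult_periodic : ult_periodic n (fun t => mpow n B t) sigma.
Proof.
  exists transient_bound. intros t Ht i j Hi Hj.
  apply Rle_antisym; apply mpow_le_shift; auto; lia.
Qed.

Lemma crit_closed_walk_length_divide l : Forall (crit_offset n a lam) l ->
  (list_sum l mod n = 0)%nat -> Nat.divide sigma (length l).
Proof. apply (walk_period_divide_closed n _ s0 n_pos s0_crit s0_lt sigma sigma_period). Qed.

(* The diagonal entry at a critical closed walk length is 1, and by periodicity so is the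
   entry sigma' steps later; an optimal walk of weight 1 is critical. *)
Lemma mpow_period_minimal sigma' : (0 < sigma')%nat ->
  ult_periodic n (fun t => mpow n B t) sigma' -> (sigma <= sigma')%nat.
Proof.
  intros Hsg' [T HT]. pose proof sigma_pos. set (t := (sigma * (T + n))%nat).
  destruct (crit_closed_walk_exists t) as [Z [HZ1 [HZ2 HZ3]]];
    [apply Nat.divide_factor_l|unfold t; nia|].
  assert (HZlt : Forall (fun d => d < n)%nat Z)
    by (eapply Forall_impl; [|exact HZ2]; intros x [? ?]; auto).
  pose proof (mpow_ge_offset_weight Z 0 n_pos HZlt) as Hup.
  rewrite (offset_weight_crit Z), HZ1 in Hup by auto. simpl in Hup. rewrite HZ3 in Hup.
  pose proof (mpow_le_1 t 0%nat 0%nat n_pos).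
  specialize (HT t ltac:(unfold t; nia) 0%nat 0%nat n_pos n_pos). simpl in HT.
  destruct (mpow_attained (t + sigma') 0%nat 0%nat n_pos) as [E|[ds [Hl [Hds [Hj Hp]]]]];
    [rewrite HT in E; lra|].
  assert (Hcr : Forall (crit_offset n a lam) ds).
  { apply NNPP. intro HF. apply neg_Forall_Exists_neg in HF; [|apply crit_offset_dec].
    enough (offset_weight ds < 1) by lra.
    apply offset_weight_lt_1; auto. rewrite Exists_exists in *.
    destruct HF as [x [Hx1 Hx2]]. exists x. split; auto.
    intro. apply Hx2. split; auto. rewrite Forall_forall in Hds. auto. }
  pose proof (crit_closed_walk_length_divide ds Hcr Hj) as Hd.
  rewrite Hl in Hd. apply Nat.divide_add_cancel_r in Hd; [|apply Nat.divide_factor_l].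
  apply Nat.divide_pos_le; auto.
Qed.

Lemma mpow_is_ult_period : is_ult_period n (fun t => mpow n B t) sigma.
Proof.
  split; [apply sigma_pos|split; [apply mpow_ult_periodic|apply mpow_period_minimal]].
Qed.

Section ComponentCycles.

Variables (m r : nat).
Hypothesis m_pos : (0 < m)%nat.
Hypothesis m_divide_n : Nat.divide m n.
Hypothesis m_divide_crit : forall d, crit_offset n a lam d -> Nat.divide m d.
Hypothesis r_lt_m : (r < m)%nat.

Lemma comp_cycle_length_divide k : comp_cycle_length n (circ n a) lam m r k -> Nat.divide sigma k.
Proof.
  intros [c [Hc [Hcn [Hce <-]]]].
  assert (Hclt : Forall (fun x => x < n)%nat c)
    by (eapply Forall_impl; [|exact Hcn]; intros x [? ?]; auto).
  rewrite <- (cycle_edges_length c), <- (length_map (fun e => offset n (fst e) (snd e))) by auto.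
  apply crit_closed_walk_length_divide; [|apply cycle_offsets_sum; auto].
  apply Forall_map. eapply Forall_impl; [|exact Hce]. intros [u v] He.
  apply crit_edge_iff in He. destruct He as [? [? ?]]. split; auto. apply offset_lt; auto.
Qed.

Lemma comp_cycle_length_of_period L : Nat.divide sigma L -> (n <= L)%nat ->
  comp_cycle_length n (circ n a) lam m r L.
Proof.
  intros HL HnL. destruct (crit_closed_walk_exists L HL HnL) as [ds [H1 [H2 H3]]].
  assert (Hrn : (r < n)%nat) by (pose proof (Nat.divide_pos_le m n n_pos m_divide_n); lia).
  assert (Hne : ds <> []) by (intro E; rewrite E in H1; simpl in H1; lia).
  assert (Hwe : walk_end n r ds = r).
  { rewrite walk_end_sum, add_mod0_r by auto. apply Nat.mod_small; auto. }
  exists (walk_nodes n r ds). split; [destruct ds; [congruence|discriminate]|]. split.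
  - apply walk_nodes_comp_nodes; auto; [|apply Nat.mod_small; lia].
    eapply Forall_impl; [|exact H2]. auto.
  - split; [|rewrite walk_nodes_length; auto].
    rewrite cycle_edges_walk_nodes by auto. apply walk_edges_crit; auto.
Qed.

Lemma comp_cycle_length_gcd : is_gcd_of (comp_cycle_length n (circ n a) lam m r) sigma.
Proof.
  split; [apply comp_cycle_length_divide|]. intros d Hd. pose proof sigma_pos.
  pose proof (Hd _ (comp_cycle_length_of_period (n * sigma) (Nat.divide_factor_r _ _) ltac:(nia))).
  pose proof (Hd _ (comp_cycle_length_of_period ((n + 1) * sigma) (Nat.divide_factor_r _ _) ltac:(nia))).
  replace sigma with ((n + 1) * sigma - n * sigma)%nat by nia. apply Nat.divide_sub_r; auto.
Qed.

End ComponentCycles.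

End Period.

Section CriticalPeriod.

Variable ps : list nat.
Hypothesis ps_spec : forall t, In t ps <-> ((1 <= t < n)%nat /\ a t = lam).

Lemma crit_period_of_walk_period s0 sigma : crit_offset n a lam s0 ->
  is_walk_period n (crit_offset n a lam) s0 sigma ->
  is_ult_period n (fun t => mpow n B t) sigma /\
  forall r, (r < gcd_list n ps)%nat -> is_gcd_of (comp_cycle_length n (circ n a) lam (gcd_list n ps) r) sigma.
Proof.
  intros Hs0 Hsg. split; [apply (mpow_is_ult_period s0); auto|].
  intros r Hr. apply (comp_cycle_length_gcd s0); auto.
  - apply gcd_list_pos; auto.
  - apply gcd_list_divide_n.
  - apply gcd_list_divide_crit_offset; auto.
Qed.

Hypothesis a0_not_crit : a 0%nat <> lam.

Lemma ps_nonempty : ps <> [].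
Proof.
  destruct crit_offset_exists as [t [Ht Hat]]. intro E.
  assert (Hin : In t ps) by (apply ps_spec; split; [destruct t; [congruence|lia]|auto]).
  rewrite E in Hin. inversion Hin.
Qed.

Lemma ps_range p : In p ps -> (1 <= p < n)%nat.
Proof. intro Hp. apply ps_spec in Hp. tauto. Qed.

Lemma hd_in : In (hd 0%nat ps) ps.
Proof. apply hd_in_nonempty, ps_nonempty. Qed.

Lemma hd_crit : crit_offset n a lam (hd 0%nat ps).
Proof. apply (crit_offset_of_in ps ps_spec), hd_in. Qed.

Hypothesis ps_sorted : StronglySorted gt ps.

(* Each critical offset d contributes d - p_1 = - (p_1 - d). *)
Lemma reduced_sum_divide_gcd_diffs c y : reduced_sum n (crit_offset n a lam) (hd 0%nat ps) c y ->
  Nat.divide (gcd_diffs n ps) y.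
Proof.
  intros [l [Hl [Hc Hm]]]. set (p1 := hd 0%nat ps) in *.
  assert (Hp1 : (p1 < n)%nat) by apply hd_crit.
  apply (divide_mod_iff n); auto; [apply gcd_diffs_divide_n|]. rewrite <- Hm.
  apply divide_mod_iff; auto; [apply gcd_diffs_divide_n|]. subst c. clear Hm.
  induction Hc as [|d l Hd Hl IH]; simpl; [apply Nat.divide_0_r|].
  match goal with |- Nat.divide _ ?X =>
    replace X with ((d + (n - p1)) + (list_sum l + length l * (n - p1)))%nat by lia end.
  apply Nat.divide_add_r; auto.
  assert (Hdin : In d ps).
  { apply ps_spec. destruct Hd as [Hd Had]. split; auto. destruct d; [congruence|lia]. }
  pose proof (StronglySorted_gt_le_hd ps d ps_sorted Hdin).
  apply (Nat.divide_add_cancel_r _ (p1 - d)); [apply gcd_diffs_divide_diff; auto|].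
  replace (p1 - d + (d + (n - p1)))%nat with n by lia. apply gcd_diffs_divide_n.
Qed.

(* The list [q; p_1; ...; p_1] of length n has reduced sum q - p_1; multiply by n - 1. *)
Lemma reduced_sum_hd_diff q : In q ps ->
  reduced_sum n (crit_offset n a lam) (hd 0%nat ps) n (hd 0%nat ps - q).
Proof.
  intros Hq. set (p1 := hd 0%nat ps). pose proof hd_crit as Hs.
  assert (Hqc : crit_offset n a lam q) by (apply (crit_offset_of_in ps ps_spec); auto).
  pose proof (StronglySorted_gt_le_hd ps q ps_sorted Hq). pose proof (ps_range _ hd_in).
  assert (E : reduced_sum n (crit_offset n a lam) p1 n (q + (n - 1) * p1)).
  { exists (q :: repeat p1 (n - 1)). split; [simpl; rewrite repeat_length; lia|split].
    - constructor; auto. apply Forall_forall. intros x Hx. apply repeat_spec in Hx. subst; auto.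
    - simpl list_sum. rewrite list_sum_repeat.
      apply (mod_eq_of_add_mul _ _ _ 0 (n - p1)). replace (S (n - 1)) with n by lia. ring. }
  apply (reduced_sum_n_mul n _ p1 n_pos Hs (proj1 Hs) _ (n - 1)) in E.
  eapply reduced_sum_mod; [|exact E]. apply (mod_eq_of_add_mul _ _ _ 0 (q + (n - 2) * p1)).
  destruct n as [|[|n']]; [lia|lia|]. replace (S (S n') - 1)%nat with (S n') by lia.
  replace (S (S n') - 2)%nat with n' by lia. nia.
Qed.

Lemma reduced_sum_of_divide_gcd_diffs y : Nat.divide (gcd_diffs n ps) y ->
  reduced_sum n (crit_offset n a lam) (hd 0%nat ps) n y.
Proof.
  intros [k ->]. pose proof hd_crit as Hs. set (p1 := hd 0%nat ps) in *.
  apply (closed_under_gcd_list n (fun y => reduced_sum n (crit_offset n a lam) p1 n y)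
           (map (fun q => p1 - q)%nat ps)); auto.
  - intros. apply reduced_sum_n_add; auto. apply Hs.
  - intros x j Hx. eapply reduced_sum_mod; [|exact Hx]. apply Nat.Div0.mod_add.
  - intro k'. apply (reduced_sum_mod _ _ _ _ 0); [|apply reduced_sum_n_0; auto; apply Hs].
    rewrite Nat.Div0.mod_mul, Nat.Div0.mod_0_l. auto.
  - intros x Hx k'. apply reduced_sum_n_mul; auto; [apply Hs|].
    apply in_map_iff in Hx. destruct Hx as [q [<- Hq]]. apply reduced_sum_hd_diff; auto.
Qed.

Lemma walk_period_gcd_diffs sigma : is_walk_period n (crit_offset n a lam) (hd 0%nat ps) sigma ->
  forall k, Nat.divide sigma k <-> Nat.divide (gcd_diffs n ps) (k * hd 0%nat ps).
Proof.
  intros [_ Hiff] k. rewrite <- Hiff. set (p1 := hd 0%nat ps).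
  assert (Hp1 : (p1 < n)%nat) by apply hd_crit.
  assert (Hkn : (k * (n - p1) + k * p1 = k * n)%nat) by nia.
  assert (Hg : Nat.divide (gcd_diffs n ps) (k * n)) by apply Nat.divide_mul_r, gcd_diffs_divide_n.
  split; intro HE.
  - apply reduced_sum_divide_gcd_diffs in HE.
    apply (Nat.divide_add_cancel_r _ (k * (n - p1))); auto. rewrite Hkn. auto.
  - apply reduced_sum_of_divide_gcd_diffs.
    apply (Nat.divide_add_cancel_r _ (k * p1)); auto. rewrite Nat.add_comm, Hkn. auto.
Qed.

End CriticalPeriod.

End Circulant.

Lemma crit_period n a lam ps : (0 < n)%nat -> (forall t, (t < n)%nat -> 0 <= a t) ->
  is_lambda n (circ n a) lam -> StronglySorted gt ps ->
  (forall t, In t ps <-> ((1 <= t < n)%nat /\ a t = lam)) ->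
  exists sigma : nat,
     is_ult_period n (fun t => mpow n (mscale (circ n a) lam) t) sigma /\
     (forall r, (r < gcd_list n ps)%nat ->
        is_gcd_of (comp_cycle_length n (circ n a) lam (gcd_list n ps) r) sigma) /\
     (a 0%nat = lam -> sigma = 1%nat) /\
     (a 0%nat <> lam ->
        sigma = per_formula1 n ps /\ sigma = per_formula2 n ps /\ sigma = per_formula3 n ps).
Proof.
  intros Hn Ha Hlam Hsorted Hps.
  destruct (Req_EM_T (a 0%nat) lam) as [E|E].
  - assert (Hs0 : crit_offset n a lam 0) by (split; auto).
    destruct (walk_period_exists n _ 0 Hn Hs0 Hn) as [sigma Hsg]. exists sigma.
    destruct (crit_period_of_walk_period n a lam Hn Ha Hlam ps Hps 0 sigma Hs0 Hsg) as [Hper Hgcd].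
    split; [exact Hper|split; [exact Hgcd|split]].
    + intros _. apply (walk_period_s0_0 n _ 0 Hn Hs0 Hn sigma Hsg); auto.
    + intro; congruence.
  - pose proof (hd_crit n a lam Hn Ha Hlam ps Hps E) as Hs0.
    destruct (walk_period_exists n _ _ Hn Hs0 (proj1 Hs0)) as [sigma Hsg]. exists sigma.
    destruct (crit_period_of_walk_period n a lam Hn Ha Hlam ps Hps _ sigma Hs0 Hsg) as [Hper Hgcd].
    split; [exact Hper|split; [exact Hgcd|split]].
    + intro; congruence.
    + intros _. apply (period_formulas n ps Hn).
      * apply (ps_nonempty n a lam Hn Ha Hlam ps Hps E).
      * exact Hsorted.
      * apply (ps_range n a lam ps Hps).
      * apply (walk_period_gcd_diffs n a lam Hn Ha Hlam ps Hps E Hsorted sigma Hsg).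
Qed.

Theorem proposition3 (n : nat) (a : nat -> R) (lam : R) (ps : list nat)
  (Ha_nonneg : forall t, (t < n)%nat -> 0 <= a t)
  (HA_nz : exists t, (t < n)%nat /\ a t <> 0)
  (Hlam : is_lambda n (circ n a) lam)
  (Hps_sorted : StronglySorted gt ps)
  (Hps : forall t, In t ps <-> ((1 <= t < n)%nat /\ a t = lam)) :
  let A := circ n a in
  let m := gcd_list n ps in
  (* (i) *)
  ((forall v, (v < n)%nat -> crit_node n A lam v) /\
   (forall u v, (u < n)%nat -> (v < n)%nat ->
      (crit_scc n A lam u v <-> (u mod m = v mod m)%nat)) /\
   (forall r1 r2, (r1 < m)%nat -> (r2 < m)%nat ->
      exists f : nat -> nat,
        (forall v, comp_nodes n m r1 v -> comp_nodes n m r2 (f v)) /\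
        (forall u v, comp_nodes n m r1 u -> comp_nodes n m r1 v -> f u = f v -> u = v) /\
        (forall w, comp_nodes n m r2 w -> exists v, comp_nodes n m r1 v /\ f v = w) /\
        (forall u v, comp_nodes n m r1 u -> comp_nodes n m r1 v ->
           (crit_edge n A lam u v <-> crit_edge n A lam (f u) (f v))))) /\
  (* (ii) *)
  (exists sigma : nat,
     is_ult_period n (fun t => mpow n (mscale A lam) t) sigma /\
     (forall r, (r < m)%nat -> is_gcd_of (comp_cycle_length n A lam m r) sigma) /\
     (a 0%nat = lam -> sigma = 1%nat) /\
     (a 0%nat <> lam ->
        sigma = per_formula1 n ps /\ sigma = per_formula2 n ps /\
        sigma = per_formula3 n ps)).
Proof.
  intros A m.
  assert (Hn : (0 < n)%nat) by (destruct HA_nz as [t [Ht _]]; lia).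
  split; [split; [|split]|].
  - apply (crit_node_all n a lam Hn Ha_nonneg Hlam).
  - apply (crit_scc_iff n a lam Hn Ha_nonneg Hlam ps Hps).
  - apply (crit_components_isomorphic n a lam Hn Ha_nonneg Hlam ps).
  - apply (crit_period n a lam ps Hn Ha_nonneg Hlam Hps_sorted Hps).
Qed.
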